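(* Let $f_0\in C^\infty([0,\infty))$ be a monotone solution of \[ f''(y)+\left(\frac{2}{y}-\frac{y}{2}\right)f'(y)-\frac{1}{y^2}\sin(2f(y))=0\ \ (y>0),\qquad f(0)=0,\qquad \lim_{y\to\infty}f(y)\ \text{finite}, \] satisfying $\lVert f_0-\widetilde f_0\rVert\le 5\cdot10^{-4}$ (notation in the context), and let $\mathcal A_0$ be the unique self-adjoint extension on $L^2_\rho(0,\infty)$, $\rho(y)=y^2e^{-y^2/4}$, of $\mathcal A_0 w=-\frac{1}{\rho}\partial_y(\rho\,\partial_yw)+\frac{2\cos(2f_0(y))}{y^2}w$ on $C_0^\infty(0,\infty)$. Then $W(y):=yf_0'(y)$ is an eigenfunction of $\mathcal A_0$ with eigenvalue $-1$. Furthermore, $W(y)>0$ for all $y\in(0,\infty)$.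
   Context: Here $\widetilde f_0(y)=2\arctan\big(\sum_{n=0}^{14}(f_0)_nT_{2n+1}(y/\sqrt{2+y^2})\big)$ with $T_m$ the Chebyshev polynomials of the first kind and coefficients $(f_0)_0,\dots,(f_0)_{14}$ equal to $\frac{268245}{72878},\frac{-3174}{105551},\frac{1897}{97022},\frac{14}{72731},\frac{79}{119383},\frac{4}{66337},\frac{5}{109368},\frac{1}{109045},\frac{1}{204079},\frac{1}{675805},\frac{1}{1400761},\frac{1}{3586839},\frac{1}{7289041},\frac{1}{16940631},\frac{1}{59286294}$; $\lVert f\rVert=\lVert p_1f\rVert_{L^\infty(0,\infty)}+\lVert p_3f'\rVert_{L^\infty(0,\infty)}$ with $p_1(y)=\frac{\sqrt{2+y^2}}{\sqrt2\,y}$, $p_3(y)=\frac{(2+y^2)^{3/2}}{2\sqrt2}$. *)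

From Stdlib Require Import Reals List.
From Coquelicot Require Import Coquelicot.
Import ListNotations.
Open Scope R_scope.

Fixpoint cheb (n : nat) (t : R) : R :=
  match n with
  | O => 1
  | S m => match m with
           | O => t
           | S k => 2 * t * cheb m t - cheb k t
           end
  end.

Definition f0_coefs : list R :=
  [268245 / 72878; -3174 / 105551; 1897 / 97022; 14 / 72731; 79 / 119383;
   4 / 66337; 5 / 109368; 1 / 109045; 1 / 204079; 1 / 675805; 1 / 1400761;
   1 / 3586839; 1 / 7289041; 1 / 16940631; 1 / 59286294].

Definition ftilde (y : R) : R :=
  2 * atan (sum_f_R0 (fun n => nth n f0_coefs 0 *
                         cheb (2 * n + 1) (y / sqrt (2 + y ^ 2))) 14).

Definition p1 (y : R) : R := sqrt (2 + y ^ 2) / (sqrt 2 * y).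
Definition p3 (y : R) : R := (2 + y ^ 2) * sqrt (2 + y ^ 2) / (2 * sqrt 2).

(** ||g|| <= eps, where ||g|| = ||p1 g||_{L^oo(0,oo)} + ||p3 g'||_{L^oo(0,oo)}
    (g continuous on (0,oo), so the essential sup is the sup). *)
Definition weighted_norm_le (g : R -> R) (eps : R) : Prop :=
  exists a b : R, a + b <= eps /\
    (forall y, 0 < y -> Rabs (p1 y * g y) <= a) /\
    (forall y, 0 < y -> Rabs (p3 y * Derive g y) <= b).

(** f is in C^oo([0,oo)): all derivatives exist on (0,oo) and extend
    continuously to 0 (and f itself is right-continuous at 0). *)
Definition smooth_closed_halfline (f : R -> R) : Prop :=
  (forall n x, 0 < x -> ex_derive_n f n x) /\
  (forall n, exists L, filterlim (Derive_n f n) (at_right 0) (locally L)) /\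
  filterlim f (at_right 0) (locally (f 0)).

Definition monotone_halfline (f : R -> R) : Prop :=
  (forall x y, 0 <= x <= y -> f x <= f y) \/
  (forall x y, 0 <= x <= y -> f y <= f x).

Definition rho (y : R) : R := y ^ 2 * exp (- (y ^ 2) / 4).

Definition test_fn (phi : R -> R) : Prop :=
  (exists a b, 0 < a < b /\ forall y, (y < a \/ b < y) -> phi y = 0) /\
  (forall n y, 0 < y -> ex_derive_n phi n y).

Definition A0 (f0 : R -> R) (w : R -> R) (y : R) : R :=
  - Derive (fun z => rho z * Derive w z) y / rho y
  + 2 * cos (2 * f0 y) / y ^ 2 * w y.

Definition l2rho_sq_le (h : R -> R) (eps : R) : Prop :=
  exists v, is_RInt_gen (fun y => (h y) ^ 2 * rho y)
              (at_right 0) (Rbar_locally p_infty) v /\ v <= eps.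

(** (W, V) lies in the graph of the closure of A0 on C_0^oo(0,oo) in
    L^2_rho(0,oo).  Since A0 is essentially self-adjoint, this closure is
    its unique self-adjoint extension. *)
Definition in_closure_graph (f0 W V : R -> R) : Prop :=
  exists phi : nat -> R -> R,
    (forall n, test_fn (phi n)) /\
    (forall eps, 0 < eps -> exists N, forall n, (N <= n)%nat ->
       l2rho_sq_le (fun y => phi n y - W y) eps /\
       l2rho_sq_le (fun y => A0 f0 (phi n) y - V y) eps).

Definition eigenfunction_A0 (f0 W : R -> R) (lam : R) : Prop :=
  in_closure_graph f0 W (fun y => lam * W y) /\
  exists y, 0 < y /\ W y <> 0.

From Stdlib Require Import Reals Lra Lia Classical.
From Coquelicot Require Import Coquelicot.
Open Scope R_scope.

(* Positivity: at y = sqrt (2/3) one has y / sqrt (2 + y^2) = 1/2, where the Chebyshev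
   sum defining [ftilde] is computable; closeness to [ftilde] then gives
   f0 (sqrt (2/3)) > 1/2 > f0 0, so the monotone f0 is nondecreasing and f0' >= 0.
   At a zero y1 > 0 of f0', f0'' vanishes as well, the ODE gives sin (2 f0 y1) = 0, and a
   Gronwall argument on the energy (f0 - f0 y1)^2 + f0'^2 makes f0 constant on
   (0, y1 + sqrt (2/3)], which contradicts f0 (0+) = 0. Hence W = y f0' > 0.

   Eigenfunction: differentiating the ODE, written as (rho f0')' = e^(-y^2/4) sin (2 f0),
   shows A0 W = - W pointwise. Near 0, W = O(y) with W' bounded since f0 is smooth up to
   0; near infinity f0' <= 2/y^3 since f0 has a limit there. Smooth cutoffs chi_m, equal
   to 1 on [3/m, m] and supported in [1/m, 2m], then give test functions chi_m W with
   chi_m W - W and A0 (chi_m W) + W both of squared L^2_rho norm O(1/m). *)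

(* Coquelicot's rules are stated with the [plus], [mult], [scal] of an abstract
   normed module and do not unify with goals written with [Rplus], [Rmult]. *)
Lemma is_derive_Rconst (c x : R) : is_derive (fun _ => c) x 0.
Proof. apply is_derive_Reals, derivable_pt_lim_const. Qed.

Lemma is_derive_Rid (x : R) : is_derive (fun y => y) x 1.
Proof. apply is_derive_Reals, derivable_pt_lim_id. Qed.

Lemma is_derive_Rplus (f g : R -> R) (x a b : R) :
  is_derive f x a -> is_derive g x b -> is_derive (fun y => f y + g y) x (a + b).
Proof. exact (is_derive_plus f g x a b). Qed.

Lemma is_derive_Rminus (f g : R -> R) (x a b : R) :
  is_derive f x a -> is_derive g x b -> is_derive (fun y => f y - g y) x (a - b).
Proof. exact (is_derive_minus f g x a b). Qed.

Lemma is_derive_Ropp (f : R -> R) (x a : R) : is_derive f x a -> is_derive (fun y => - f y) x (- a).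
Proof. exact (is_derive_opp f x a). Qed.

Lemma is_derive_Rmult (f g : R -> R) (x a b : R) : is_derive f x a -> is_derive g x b ->
  is_derive (fun y => f y * g y) x (a * g x + f x * b).
Proof.
  rewrite !is_derive_Reals. exact (derivable_pt_lim_mult f g x a b).
Qed.

Lemma is_derive_Rcomp (f g : R -> R) (x a b : R) : is_derive f (g x) a -> is_derive g x b ->
  is_derive (fun y => f (g y)) x (b * a).
Proof. exact (is_derive_comp f g x a b). Qed.

Lemma is_derive_eq (f : R -> R) (x a b : R) : is_derive f x a -> a = b -> is_derive f x b.
Proof. now intros H <-. Qed.

Lemma is_derive_Rext (f g : R -> R) (x l : R) :
  (forall t, f t = g t) -> is_derive f x l -> is_derive g x l.
Proof. exact (is_derive_ext f g x l). Qed.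

Lemma is_derive_Rext_loc (f g : R -> R) (x l : R) :
  locally x (fun t => f t = g t) -> is_derive f x l -> is_derive g x l.
Proof. exact (is_derive_ext_loc f g x l). Qed.

Lemma is_derive_affine (f df : R -> R) (a b y : R) : (forall x, is_derive f x (df x)) ->
  is_derive (fun y => f (a * y + b)) y (a * df (a * y + b)).
Proof.
  intros D. eapply is_derive_eq.
  - apply is_derive_Rcomp; [apply D |].
    apply is_derive_Rplus; [apply is_derive_Rmult |];
      auto using is_derive_Rconst, is_derive_Rid.
  - cbv beta; ring.
Qed.

Lemma is_derive_continuity_pt (f : R -> R) (x l : R) : is_derive f x l -> continuity_pt f x.
Proof.
  intros H. apply is_derive_Reals in H. apply derivable_continuous_pt. now exists l.
Qed.

Lemma locally_pos (P : R -> Prop) (y : R) : 0 < y -> (forall z, 0 < z -> P z) -> locally y P.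
Proof. intros Hy H. apply locally_interval with 0 p_infty; simpl; auto. Qed.

Definition derivable_upto (U : R -> Prop) (n : nat) (f : R -> R) :=
  forall k x, (k <= n)%nat -> U x -> ex_derive_n f k x.

Definition smooth_on (U : R -> Prop) (f : R -> R) := forall n, derivable_upto U n f.

Definition smooth (f : R -> R) := smooth_on (fun _ => True) f.

Lemma Derive_n_Derive f k x : Derive_n (Derive f) k x = Derive_n f (S k) x.
Proof.
  replace (S k) with (k + 1)%nat by lia. rewrite <- (Derive_n_comp f k 1).
  now apply Derive_n_ext.
Qed.

Lemma ex_derive_n_Derive f k x :
  ex_derive_n (Derive f) (S k) x <-> ex_derive_n f (S (S k)) x.
Proof. split; apply ex_derive_ext; intro t; now rewrite Derive_n_Derive. Qed.

Lemma derivable_upto_le U n m f : (m <= n)%nat -> derivable_upto U n f -> derivable_upto U m f.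
Proof. intros H D k x Hk Hx. apply D; auto; lia. Qed.

Lemma derivable_upto_S U n f : derivable_upto U (S n) f <->
  (forall x, U x -> ex_derive f x) /\ derivable_upto U n (Derive f).
Proof.
  split.
  - intros D; split.
    + intros x Hx. exact (D 1%nat x ltac:(lia) Hx).
    + intros [|k] x Hk Hx; [exact I |]. apply (ex_derive_n_Derive f k x), D; [lia | exact Hx].
  - intros [H1 D] [|[|k]] x Hk Hx; [exact I | |].
    + now apply H1.
    + apply (ex_derive_n_Derive f k x), D; [lia | exact Hx].
Qed.

Lemma derivable_upto_ext U n f g : open U -> (forall x, U x -> f x = g x) ->
  derivable_upto U n f -> derivable_upto U n g.
Proof.
  intros HU E D k x Hk Hx. apply ex_derive_n_ext_loc with f; [| now apply D].
  apply filter_imp with U; [auto | now apply HU].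
Qed.

Lemma derivable_upto_plus U n f g : open U ->
  derivable_upto U n f -> derivable_upto U n g -> derivable_upto U n (fun x => f x + g x).
Proof.
  intros HU Df Dg k x Hk Hx.
  apply ex_derive_n_plus; (apply filter_imp with U; [| now apply HU]);
    intros y Hy j Hj; [apply Df | apply Dg]; auto; lia.
Qed.

Lemma derivable_upto_scal U n c f :
  derivable_upto U n f -> derivable_upto U n (fun x => c * f x).
Proof. intros D k x Hk Hx. apply ex_derive_n_scal_l. auto. Qed.

Lemma derivable_upto_mult U n f g : open U ->
  derivable_upto U n f -> derivable_upto U n g -> derivable_upto U n (fun x => f x * g x).
Proof.
  intros HU. revert f g. induction n as [|n IH]; intros f g Df Dg.
  - intros k x Hk _. now replace k with 0%nat by lia.
  - assert (Dfn : derivable_upto U n f) by (apply derivable_upto_le with (S n); auto).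
    assert (Dgn : derivable_upto U n g) by (apply derivable_upto_le with (S n); auto).
    apply derivable_upto_S in Df as [df Df'], Dg as [dg Dg'].
    apply derivable_upto_S; split.
    + intros x Hx. apply ex_derive_mult; auto.
    + apply derivable_upto_ext with (fun x => Derive f x * g x + f x * Derive g x); auto.
      * intros x Hx. rewrite Derive_mult; auto.
      * apply derivable_upto_plus; auto.
Qed.

Lemma derivable_upto_inv U n g : open U -> (forall x, U x -> g x <> 0) ->
  derivable_upto U n g -> derivable_upto U n (fun x => / g x).
Proof.
  intros HU Hg. revert g Hg. induction n as [|n IH]; intros g Hg Dg.
  - intros k x Hk _. now replace k with 0%nat by lia.
  - apply derivable_upto_S in Dg as Dg'. destruct Dg' as [dg Dg'].
    apply derivable_upto_S; split.
    + intros x Hx. apply ex_derive_inv; auto.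
    + apply derivable_upto_ext with (fun x => (-1) * (Derive g x * (/ g x * / g x))); auto.
      * intros x Hx. rewrite Derive_inv; auto. field. auto.
      * assert (derivable_upto U n (fun x => / g x))
          by (apply IH, derivable_upto_le with (S n); auto).
        apply derivable_upto_scal, derivable_upto_mult, derivable_upto_mult; auto.
Qed.

Lemma smooth_on_id U : smooth_on U (fun x => x).
Proof.
  intros n k x _ _. apply ex_derive_n_ext with (fun x => x ^ 1).
  - intros; simpl; ring.
  - apply ex_derive_n_pow.
Qed.

Lemma smooth_on_plus U f g : open U ->
  smooth_on U f -> smooth_on U g -> smooth_on U (fun x => f x + g x).
Proof. intros HU F G n. now apply derivable_upto_plus. Qed.

Lemma smooth_on_mult U f g : open U ->
  smooth_on U f -> smooth_on U g -> smooth_on U (fun x => f x * g x).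
Proof. intros HU F G n. now apply derivable_upto_mult. Qed.

Lemma smooth_on_inv U f : open U -> (forall x, U x -> f x <> 0) ->
  smooth_on U f -> smooth_on U (fun x => / f x).
Proof. intros HU H F n. now apply derivable_upto_inv. Qed.

Lemma smooth_on_ext U f g : open U -> (forall x, U x -> f x = g x) ->
  smooth_on U f -> smooth_on U g.
Proof. intros HU E F n. now apply derivable_upto_ext with f. Qed.

Lemma smooth_on_Derive U f : smooth_on U f -> smooth_on U (Derive f).
Proof. intros F n. exact (proj2 (proj1 (derivable_upto_S U n f) (F (S n)))). Qed.

Lemma ex_derive_of_smooth_on U f x : smooth_on U f -> U x -> ex_derive f x.
Proof. intros F Hx. exact (F 1%nat 1%nat x (le_n 1) Hx). Qed.

Lemma smooth_on_of_smooth U f : smooth f -> smooth_on U f.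
Proof. intros F n k x Hk _. exact (F n k x Hk I). Qed.

Lemma smooth_comp_affine f a b : smooth f -> smooth (fun y => f (a * y + b)).
Proof.
  intros F n k x _ _.
  apply ex_derive_n_comp_scal with (f := fun z => f (z + b)).
  apply filter_forall. intros z j _. apply ex_derive_n_comp_trans. now apply (F j).
Qed.

Inductive is_poly : (R -> R) -> Prop :=
| is_poly_const c : is_poly (fun _ => c)
| is_poly_id : is_poly (fun u => u)
| is_poly_plus p q : is_poly p -> is_poly q -> is_poly (fun u => p u + q u)
| is_poly_mult p q : is_poly p -> is_poly q -> is_poly (fun u => p u * q u).

Lemma is_poly_derive p : is_poly p -> exists p', is_poly p' /\ forall u, is_derive p u (p' u).
Proof.
  induction 1 as [c| |p q _ [p' [Hp' Dp]] _ [q' [Hq' Dq]]|p q Hp [p' [Hp' Dp]] Hq [q' [Hq' Dq]]].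
  - exists (fun _ => 0). split; [constructor | apply is_derive_Rconst].
  - exists (fun _ => 1). split; [constructor | apply is_derive_Rid].
  - exists (fun u => p' u + q' u). split; [now constructor |].
    intro u. now apply is_derive_Rplus.
  - exists (fun u => p' u * q u + p u * q' u). split; [repeat constructor; auto |].
    intro u. now apply is_derive_Rmult.
Qed.

Lemma is_poly_bound p : is_poly p ->
  exists C m, 0 <= C /\ forall u, 1 <= u -> Rabs (p u) <= C * u ^ m.
Proof.
  induction 1 as [c| |p q _ [C1 [m1 [HC1 B1]]] _ [C2 [m2 [HC2 B2]]]
                 |p q _ [C1 [m1 [HC1 B1]]] _ [C2 [m2 [HC2 B2]]]].
  - exists (Rabs c), 0%nat. split; [apply Rabs_pos |]. intros u _. simpl; lra.
  - exists 1, 1%nat. split; [lra |]. intros u Hu. simpl. rewrite Rabs_right; lra.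
  - exists (C1 + C2), (m1 + m2)%nat. split; [lra |]. intros u Hu.
    assert (u ^ m1 <= u ^ (m1 + m2)) by (apply Rle_pow; [lra | lia]).
    assert (u ^ m2 <= u ^ (m1 + m2)) by (apply Rle_pow; [lra | lia]).
    specialize (B1 u Hu). specialize (B2 u Hu).
    eapply Rle_trans; [apply Rabs_triang | nra].
  - exists (C1 * C2), (m1 + m2)%nat. split; [nra |]. intros u Hu.
    rewrite pow_add, Rabs_mult.
    replace (C1 * C2 * (u ^ m1 * u ^ m2)) with ((C1 * u ^ m1) * (C2 * u ^ m2)) by ring.
    apply Rmult_le_compat; auto using Rabs_pos.
Qed.

Lemma exp_mult_INR k y : exp (INR k * y) = exp y ^ k.
Proof.
  induction k as [|k IH].
  - simpl. now rewrite Rmult_0_l, exp_0.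
  - rewrite S_INR, Rmult_plus_distr_r, Rmult_1_l, exp_plus, IH. simpl. ring.
Qed.

Lemma pow_le_mult_exp k : exists K, 0 < K /\ forall u, 0 <= u -> u ^ k <= K * exp u.
Proof.
  destruct k as [|k].
  - exists 1. split; [lra |]. intros u Hu. simpl. generalize (exp_ineq1_le u). lra.
  - set (n := INR (S k)). assert (Hn : 0 < n) by (apply lt_0_INR; lia).
    exists (n ^ S k). split; [now apply pow_lt |]. intros u Hu.
    replace u with (n * (u / n)) at 2 by (field; lra).
    unfold n at 2. rewrite exp_mult_INR. fold n.
    replace (u ^ S k) with (n ^ S k * (u / n) ^ S k)
      by (rewrite <- Rpow_mult_distr; f_equal; field; lra).
    apply Rmult_le_compat_l; [apply pow_le; lra |].
    assert (0 <= u / n) by (apply Rdiv_le_0_compat; lra).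
    apply pow_incr. generalize (exp_ineq1_le (u / n)). lra.
Qed.

(* Every derivative of [flat] below is of this form with [p] a polynomial. *)
Definition poly_flat (p : R -> R) (x : R) : R :=
  if Rlt_dec 0 x then p (/ x) * exp (- / x) else 0.

Lemma poly_flat_div_le p : is_poly p ->
  exists C, 0 <= C /\ forall h, 0 < h < 1 -> Rabs (p (/ h) * exp (- / h) * / h) <= C * h.
Proof.
  intros Hp. destruct (is_poly_bound p Hp) as [C [m [HC B]]].
  destruct (pow_le_mult_exp (m + 2)) as [K [HK BK]].
  exists (C * K). split; [nra |]. intros h Hh.
  set (u := / h).
  assert (Hu : 1 < u) by (unfold u; rewrite <- Rinv_1; apply Rinv_lt_contravar; lra).
  specialize (B u ltac:(lra)). specialize (BK u ltac:(lra)).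
  assert (Hee : exp (- u) * exp u = 1) by (rewrite <- exp_plus, Rplus_opp_l; apply exp_0).
  assert (He : 0 < exp (- u)) by apply exp_pos.
  assert (Hum : 0 < u ^ m) by (apply pow_lt; lra).
  rewrite pow_add in BK. simpl in BK.
  rewrite !Rabs_mult, (Rabs_right u), (Rabs_right (exp (- u))) by lra.
  replace h with (/ u) by (unfold u; field; lra).
  assert (A : u ^ m * exp (- u) * u <= K / u).
  { apply Rmult_le_reg_r with (u * exp u); [apply Rmult_lt_0_compat; [lra | apply exp_pos] |].
    replace (K / u * (u * exp u)) with (K * exp u) by (field; lra).
    replace (u ^ m * exp (- u) * u * (u * exp u))
      with (u ^ m * (u * (u * 1)) * (exp (- u) * exp u)) by ring.
    rewrite Hee. lra. }
  apply Rle_trans with (C * (u ^ m * exp (- u) * u)).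
  - replace (C * (u ^ m * exp (- u) * u)) with (C * u ^ m * exp (- u) * u) by ring.
    repeat apply Rmult_le_compat_r; lra.
  - replace (C * K * / u) with (C * (K / u)) by (field; lra). now apply Rmult_le_compat_l.
Qed.

Lemma poly_flat_derive_0 p : is_poly p -> is_derive (poly_flat p) 0 0.
Proof.
  intros Hp. destruct (poly_flat_div_le p Hp) as [C [HC B]].
  apply is_derive_Reals. intros eps Heps.
  set (d := Rmin 1 (eps / (C + 1))).
  assert (Hd : 0 < d) by (apply Rmin_pos; [lra | apply Rdiv_lt_0_compat; lra]).
  exists (mkposreal d Hd). intros h Hh0 Hh. simpl in Hh.
  unfold poly_flat. destruct (Rlt_dec 0 0) as [| _]; [lra |].
  rewrite Rplus_0_l. destruct (Rlt_dec 0 h) as [Hh' | Hh'].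
  2:{ replace ((0 - 0) / h - 0) with 0 by (field; auto). rewrite Rabs_R0. lra. }
  rewrite Rabs_right in Hh by lra.
  assert (d <= 1) by apply Rmin_l. assert (Hd2 : d <= eps / (C + 1)) by apply Rmin_r.
  replace ((p (/ h) * exp (- / h) - 0) / h - 0) with (p (/ h) * exp (- / h) * / h)
    by (field; lra).
  eapply Rle_lt_trans; [apply B; lra |].
  apply Rle_lt_trans with (C * (eps / (C + 1))); [apply Rmult_le_compat_l; lra |].
  apply Rmult_lt_reg_r with (C + 1); [lra |].
  replace (C * (eps / (C + 1)) * (C + 1)) with (C * eps) by (field; lra). nra.
Qed.

Lemma poly_flat_derive p : is_poly p ->
  exists p', is_poly p' /\ forall x, is_derive (poly_flat p) x (poly_flat p' x).
Proof.
  intros Hp. destruct (is_poly_derive p Hp) as [p' [Hp' Dp]].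
  exists (fun u => u * (u * (p u + (-1) * p' u))). split; [repeat constructor; auto |].
  intros x. destruct (Rlt_dec 0 x) as [Hx | Hx].
  - apply is_derive_Rext_loc with (fun y => p (/ y) * exp (- / y)).
    { apply locally_pos; auto. intros y Hy. unfold poly_flat.
      now destruct (Rlt_dec 0 y). }
    unfold poly_flat. destruct (Rlt_dec 0 x) as [_ |]; [| lra].
    eapply is_derive_eq.
    + apply is_derive_Rmult; apply is_derive_Rcomp.
      * apply Dp.
      * apply is_derive_inv; [apply is_derive_Rid | lra].
      * apply is_derive_exp.
      * apply is_derive_Ropp, is_derive_inv; [apply is_derive_Rid | lra].
    + simpl. field. lra.
  - destruct (Req_dec x 0) as [-> | Hx0].
    + unfold poly_flat at 2. destruct (Rlt_dec 0 0); [lra |]. now apply poly_flat_derive_0.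
    + apply is_derive_Rext_loc with (fun _ => 0).
      { apply locally_interval with m_infty 0; simpl; auto; [lra |]. intros y _ Hy.
        unfold poly_flat. destruct (Rlt_dec 0 y); [lra | reflexivity]. }
      unfold poly_flat. destruct (Rlt_dec 0 x); [lra |]. apply is_derive_Rconst.
Qed.

Definition flat := poly_flat (fun _ => 1).

Lemma smooth_flat : smooth flat.
Proof.
  assert (E : forall n, exists p, is_poly p /\ forall x, Derive_n flat n x = poly_flat p x).
  { induction n as [|n [p [Hp E]]].
    - exists (fun _ => 1). split; [constructor | reflexivity].
    - destruct (poly_flat_derive p Hp) as [p' [Hp' D]]. exists p'. split; auto.
      intros x. simpl. rewrite (Derive_ext _ (poly_flat p)); auto. now apply is_derive_unique. }
  intros n [|k] x _ _; [exact I |].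
  destruct (E k) as [p [Hp Ek]]. destruct (poly_flat_derive p Hp) as [p2 [_ D]].
  apply ex_derive_ext with (poly_flat p); [intros; symmetry; auto |]. eexists; apply D.
Qed.

Lemma flat_pos x : 0 < x -> 0 < flat x.
Proof.
  intros H. unfold flat, poly_flat. destruct (Rlt_dec 0 x); [| lra].
  rewrite Rmult_1_l. apply exp_pos.
Qed.

Lemma flat_eq0 x : x <= 0 -> flat x = 0.
Proof. intros H. unfold flat, poly_flat. destruct (Rlt_dec 0 x); [lra | auto]. Qed.

Lemma flat_ge0 x : 0 <= flat x.
Proof. destruct (Rlt_dec 0 x). left; now apply flat_pos. rewrite flat_eq0; lra. Qed.

Definition step (x : R) : R := flat x / (flat x + flat (1 - x)).

Lemma step_denom_pos x : 0 < flat x + flat (1 - x).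
Proof.
  destruct (Rlt_dec 0 x).
  - generalize (flat_pos x r) (flat_ge0 (1 - x)). lra.
  - generalize (flat_pos (1 - x) ltac:(lra)) (flat_ge0 x). lra.
Qed.

Lemma smooth_step : smooth step.
Proof.
  assert (Hflat1 : smooth (fun x => flat (1 - x))).
  { apply smooth_on_ext with (fun x => flat (-1 * x + 1)); [apply open_true | |].
    - intros x _. f_equal. ring.
    - apply smooth_comp_affine, smooth_flat. }
  apply smooth_on_mult; [apply open_true | apply smooth_flat |].
  apply smooth_on_inv; [apply open_true | |].
  - intros x _. generalize (step_denom_pos x). lra.
  - apply smooth_on_plus; [apply open_true | apply smooth_flat | exact Hflat1].
Qed.

Lemma step_eq0 x : x <= 0 -> step x = 0.
Proof. intros H. unfold step. rewrite flat_eq0; auto. lra. Qed.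

Lemma step_eq1 x : 1 <= x -> step x = 1.
Proof.
  intros H. unfold step. rewrite (flat_eq0 (1 - x)), Rplus_0_r by lra.
  field. generalize (flat_pos x ltac:(lra)). lra.
Qed.

Lemma step_range x : 0 <= step x <= 1.
Proof.
  unfold step. generalize (step_denom_pos x) (flat_ge0 x) (flat_ge0 (1 - x)). intros H1 H2 H3.
  split; [apply Rdiv_le_0_compat; lra |].
  apply Rmult_le_reg_r with (flat x + flat (1 - x)); auto.
  unfold Rdiv. rewrite Rmult_assoc, Rinv_l; lra.
Qed.

Definition dstep := Derive step.
Definition d2step := Derive dstep.

Lemma smooth_dstep : smooth dstep.
Proof. apply smooth_on_Derive, smooth_step. Qed.

Lemma smooth_d2step : smooth d2step.
Proof. apply smooth_on_Derive, smooth_dstep. Qed.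

Lemma is_derive_step x : is_derive step x (dstep x).
Proof. apply Derive_correct, (ex_derive_of_smooth_on _ _ x smooth_step I). Qed.

Lemma is_derive_dstep x : is_derive dstep x (d2step x).
Proof. apply Derive_correct, (ex_derive_of_smooth_on _ _ x smooth_dstep I). Qed.

Lemma continuity_step x : continuity_pt step x.
Proof. exact (is_derive_continuity_pt _ _ _ (is_derive_step x)). Qed.

Lemma continuity_dstep x : continuity_pt dstep x.
Proof. exact (is_derive_continuity_pt _ _ _ (is_derive_dstep x)). Qed.

Lemma continuity_d2step x : continuity_pt d2step x.
Proof.
  destruct (ex_derive_of_smooth_on _ _ x smooth_d2step I) as [l H].
  exact (is_derive_continuity_pt _ _ _ H).
Qed.

Lemma Derive_eq0_outside01 (f : R -> R) c d x :
  (forall y, y < 0 -> f y = c) -> (forall y, 1 < y -> f y = d) ->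
  x < 0 \/ 1 < x -> Derive f x = 0.
Proof.
  intros H1 H2 [Hx | Hx].
  - rewrite (Derive_ext_loc f (fun _ => c)); [apply Derive_const |].
    apply locally_interval with m_infty 0; simpl; auto.
  - rewrite (Derive_ext_loc f (fun _ => d)); [apply Derive_const |].
    apply locally_interval with 1 p_infty; simpl; auto.
Qed.

Lemma dstep_eq0 x : x < 0 \/ 1 < x -> dstep x = 0.
Proof.
  apply Derive_eq0_outside01 with 0 1; intros; [apply step_eq0 | apply step_eq1]; lra.
Qed.

Lemma d2step_eq0 x : x < 0 \/ 1 < x -> d2step x = 0.
Proof.
  apply Derive_eq0_outside01 with 0 0; intros; apply dstep_eq0; lra.
Qed.

Lemma bounded_of_support01 (g : R -> R) : (forall x, continuity_pt g x) ->
  (forall x, x < 0 \/ 1 < x -> g x = 0) -> exists M, 0 <= M /\ forall x, Rabs (g x) <= M.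
Proof.
  intros C Z.
  destruct (bounded_continuity (K := R_AbsRing) (V := R_NormedModule) g 0 1) as [M HM].
  { intros x _. now apply continuity_pt_filterlim. }
  assert (HM0 : 0 <= M) by (generalize (HM 0 ltac:(lra)) (norm_ge_0 (g 0)); lra).
  exists M. split; auto. intros x.
  destruct (Rlt_dec x 0) as [H | H]; [rewrite Z, Rabs_R0; auto |].
  destruct (Rlt_dec 1 x) as [H' | H']; [rewrite Z, Rabs_R0; auto |].
  left. apply (HM x). lra.
Qed.

Lemma dstep_bounded : exists M, 0 <= M /\ forall x, Rabs (dstep x) <= M.
Proof. apply bounded_of_support01; [apply continuity_dstep | apply dstep_eq0]. Qed.

Lemma d2step_bounded : exists M, 0 <= M /\ forall x, Rabs (d2step x) <= M.
Proof. apply bounded_of_support01; [apply continuity_d2step | apply d2step_eq0]. Qed.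

(* [cutoff m] rises from 0 to 1 on [[1/m, 2/m]] and falls back to 0 on [[m, 2m]]. *)
Definition cutoff (m y : R) : R := step (m * y - 1) * step (2 - y / m).

Definition dcutoff (m y : R) : R :=
  m * dstep (m * y - 1) * step (2 - y / m) - step (m * y - 1) * dstep (2 - y / m) / m.

Definition d2cutoff (m y : R) : R :=
  m ^ 2 * d2step (m * y - 1) * step (2 - y / m)
  - 2 * dstep (m * y - 1) * dstep (2 - y / m)
  + step (m * y - 1) * d2step (2 - y / m) / m ^ 2.

Lemma is_derive_cutoff m y : is_derive (cutoff m) y (dcutoff m y).
Proof.
  apply (is_derive_Rext (fun y => step (m * y + -1) * step (- / m * y + 2))).
  { intro t. unfold cutoff, Rdiv, Rminus. f_equal; f_equal; ring. }
  eapply is_derive_eq.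
  - apply is_derive_Rmult; apply is_derive_affine, is_derive_step.
  - unfold dcutoff. replace (m * y + -1) with (m * y - 1) by ring.
    replace (- / m * y + 2) with (2 - y / m) by (unfold Rdiv; ring). unfold Rdiv; ring.
Qed.

Lemma is_derive_dcutoff m y : m <> 0 -> is_derive (dcutoff m) y (d2cutoff m y).
Proof.
  intros Hm.
  apply (is_derive_Rext (fun y => m * (dstep (m * y + -1) * step (- / m * y + 2))
    + - / m * (step (m * y + -1) * dstep (- / m * y + 2)))).
  { intro t. unfold dcutoff. replace (m * t - 1) with (m * t + -1) by ring.
    replace (2 - t / m) with (- / m * t + 2) by (unfold Rdiv; ring). unfold Rdiv; ring. }
  eapply is_derive_eq.
  - apply is_derive_Rplus; apply is_derive_scal;
      (apply is_derive_Rmult; apply is_derive_affine;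
       auto using is_derive_step, is_derive_dstep).
  - unfold d2cutoff. replace (m * y + -1) with (m * y - 1) by ring.
    replace (- / m * y + 2) with (2 - y / m) by (unfold Rdiv; ring). field. exact Hm.
Qed.

Lemma smooth_cutoff m : smooth (cutoff m).
Proof.
  apply smooth_on_ext with (fun y => step (m * y + -1) * step (- / m * y + 2)).
  - apply open_true.
  - intros t _. unfold cutoff, Rdiv, Rminus. do 2 f_equal; ring.
  - apply smooth_on_mult; [apply open_true | |]; apply smooth_comp_affine, smooth_step.
Qed.

Lemma continuity_d2cutoff m y : continuity_pt (d2cutoff m) y.
Proof.
  assert (A : forall f, (forall z, continuity_pt f z) ->
    continuity_pt (fun y => f (m * y - 1)) y /\ continuity_pt (fun y => f (2 - y / m)) y).
  { intros f Hf. split; apply (continuity_pt_comp _ f); auto;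
      apply derivable_continuous_pt; unfold Rdiv; reg. }
  destruct (A _ continuity_step) as [S1 S2]. destruct (A _ continuity_dstep) as [D1 D2].
  destruct (A _ continuity_d2step) as [E1 E2].
  unfold d2cutoff.
  repeat first [ assumption | apply continuity_pt_plus | apply continuity_pt_minus
               | apply continuity_pt_opp | apply continuity_pt_mult
               | apply continuity_pt_const; now intros a b ].
Qed.

Lemma cutoff_range m y : 0 <= cutoff m y <= 1.
Proof.
  unfold cutoff. generalize (step_range (m * y - 1)) (step_range (2 - y / m)). nra.
Qed.

Section CutoffRegions.

Variable m : R.
Hypothesis Hm : 3 <= m.

Lemma cutoff_support y : y < / m \/ 2 * m < y -> cutoff m y = 0.
Proof.
  intros H. unfold cutoff.
  assert (E : / m * m = 1) by (field; lra). assert (E' : y / m * m = y) by (field; lra).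
  destruct H as [H | H].
  - rewrite step_eq0; [ring | nra].
  - rewrite (step_eq0 (2 - y / m)); [ring | nra].
Qed.

Lemma cutoff_near0 y : 0 < y -> y <= 3 / m ->
  cutoff m y = step (m * y - 1) /\ dcutoff m y = m * dstep (m * y - 1) /\
  d2cutoff m y = m ^ 2 * d2step (m * y - 1).
Proof.
  intros Hy H. assert (E : 3 / m * m = 3) by (field; lra).
  assert (E' : y / m * m = y) by (field; lra).
  assert (1 < 2 - y / m) by nra.
  unfold cutoff, dcutoff, d2cutoff.
  rewrite (step_eq1 (2 - y / m)), (dstep_eq0 (2 - y / m)), (d2step_eq0 (2 - y / m)) by lra.
  repeat split; field; lra.
Qed.

Lemma cutoff_middle y : 3 / m < y < m ->
  cutoff m y = 1 /\ dcutoff m y = 0 /\ d2cutoff m y = 0.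
Proof.
  intros H. assert (E : 3 / m * m = 3) by (field; lra).
  assert (E' : y / m * m = y) by (field; lra).
  assert (1 < 2 - y / m) by nra. assert (1 < m * y - 1) by nra.
  unfold cutoff, dcutoff, d2cutoff.
  rewrite (step_eq1 (2 - y / m)), (dstep_eq0 (2 - y / m)), (d2step_eq0 (2 - y / m)) by lra.
  rewrite (step_eq1 (m * y - 1)), (dstep_eq0 (m * y - 1)), (d2step_eq0 (m * y - 1)) by lra.
  repeat split; field; lra.
Qed.

Lemma cutoff_far y : m <= y ->
  cutoff m y = step (2 - y / m) /\ dcutoff m y = - dstep (2 - y / m) / m /\
  d2cutoff m y = d2step (2 - y / m) / m ^ 2.
Proof.
  intros H. assert (1 < m * y - 1) by nra.
  unfold cutoff, dcutoff, d2cutoff.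
  rewrite (step_eq1 (m * y - 1)), (dstep_eq0 (m * y - 1)), (d2step_eq0 (m * y - 1)) by lra.
  repeat split; field; lra.
Qed.

End CutoffRegions.

(* At [t = 1/2] the Chebyshev recursion is 3-periodic up to sign, which
   reduces [ftilde y_half] to rational arithmetic. *)
Lemma cheb_half_shift3 k : cheb (S (S (S k))) (1/2) = - cheb k (1/2).
Proof.
  change (cheb (S (S (S k))) (1/2))
    with (2 * (1/2) * (2 * (1/2) * cheb (S k) (1/2) - cheb k (1/2)) - cheb (S k) (1/2)).
  field.
Qed.

Definition y_half := sqrt (2 / 3).

Lemma y_half_pos : 0 < y_half.
Proof. apply sqrt_lt_R0. lra. Qed.

Lemma y_half_sq : y_half ^ 2 = 2 / 3.
Proof. unfold y_half. simpl. rewrite Rmult_1_r. apply sqrt_sqrt. lra. Qed.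

Lemma sqrt_2_plus_y_half_sq : sqrt (2 + y_half ^ 2) = 2 * y_half.
Proof.
  generalize y_half_pos y_half_sq. intros Hp Hs.
  apply sqrt_lem_1; [nra | lra | nra].
Qed.

Lemma ftilde_y_half : 1 < ftilde y_half.
Proof.
  unfold ftilde.
  replace (y_half / sqrt (2 + y_half ^ 2)) with (1/2)
    by (rewrite sqrt_2_plus_y_half_sq; field; generalize y_half_pos; lra).
  set (S := sum_f_R0 _ 14).
  assert (HS : 1 < S).
  { unfold S. cbn [sum_f_R0]. cbv beta. cbn [Nat.mul Nat.add List.nth f0_coefs].
    repeat rewrite cheb_half_shift3. cbn [cheb]. lra. }
  assert (atan 1 < atan S) by now apply atan_increasing.
  rewrite atan_1 in H. generalize PI2_3_2. lra.
Qed.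

Lemma p1_y_half : 1 <= p1 y_half.
Proof.
  unfold p1. rewrite sqrt_2_plus_y_half_sq. generalize y_half_pos; intro.
  assert (Hs : 0 < sqrt 2) by (apply sqrt_lt_R0; lra).
  assert (sqrt 2 < 2) by (rewrite <- (sqrt_square 2) at 2 by lra; apply sqrt_lt_1; lra).
  replace (2 * y_half / (sqrt 2 * y_half)) with (2 / sqrt 2) by (field; lra).
  apply Rmult_le_reg_r with (sqrt 2); auto. unfold Rdiv. rewrite Rmult_assoc, Rinv_l; lra.
Qed.

Lemma le_of_is_derive_ge0 (h dh : R -> R) u v : u <= v ->
  (forall x, u <= x <= v -> is_derive h x (dh x)) -> (forall x, u <= x <= v -> 0 <= dh x) ->
  h u <= h v.
Proof.
  intros Huv D P. destruct (MVT_gen h u v dh) as [c [Hc E]];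
    rewrite ?Rmin_left, ?Rmax_right in * by lra.
  - intros x Hx. apply D; lra.
  - intros x Hx. apply (is_derive_continuity_pt h x (dh x)), D; lra.
  - specialize (P c Hc). assert (0 <= dh c * (v - u)) by (apply Rmult_le_pos; lra). lra.
Qed.

Lemma Rabs_sin_sub_le u v : Rabs (sin u - sin v) <= Rabs (u - v).
Proof.
  destruct (MVT_gen sin v u cos) as [c [_ E]].
  - intros x _. apply is_derive_sin.
  - intros x _. apply continuity_sin.
  - rewrite E, Rabs_mult. generalize (COS_bound c). intros Hc.
    assert (Rabs (cos c) <= 1) by (apply Rabs_le; lra).
    generalize (Rabs_pos (cos c)) (Rabs_pos (u - v)). nra.
Qed.

Lemma is_derive_ge0_of_nondecreasing (f : R -> R) y l : 0 < y ->
  (forall a b, 0 <= a <= b -> f a <= f b) -> is_derive f y l -> 0 <= l.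
Proof.
  intros Hy Hm D. apply is_derive_Reals in D.
  destruct (Rle_dec 0 l) as [| Hl]; auto. exfalso.
  destruct (D (- l / 2) ltac:(lra)) as [d Hd].
  set (h := Rmin (d / 2) (y / 2)).
  assert (Hh : 0 < h) by (unfold h; apply Rmin_pos; generalize (cond_pos d); lra).
  assert (Hh2 : h <= d / 2) by apply Rmin_l.
  specialize (Hd h ltac:(lra) ltac:(rewrite Rabs_right; lra)).
  assert (f y <= f (y + h)) by (apply Hm; lra).
  assert (0 <= (f (y + h) - f y) / h) by (apply Rdiv_le_0_compat; lra).
  apply Rabs_def2 in Hd. lra.
Qed.

Lemma is_derive_eq0_at_min (g : R -> R) y l : 0 < y ->
  (forall z, 0 < z -> 0 <= g z) -> g y = 0 -> is_derive g y l -> l = 0.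
Proof.
  intros Hy Hg Hgy D. apply is_derive_Reals in D.
  destruct (Rtotal_order l 0) as [Hl | [Hl | Hl]]; auto; exfalso.
  - destruct (D (- l / 2) ltac:(lra)) as [d Hd].
    set (h := Rmin (d / 2) (y / 2)).
    assert (Hh : 0 < h) by (unfold h; apply Rmin_pos; generalize (cond_pos d); lra).
    assert (Hh2 : h <= d / 2) by apply Rmin_l.
    specialize (Hd h ltac:(lra) ltac:(rewrite Rabs_right; lra)).
    assert (0 <= g (y + h)) by (apply Hg; lra).
    assert (0 <= (g (y + h) - g y) / h) by (apply Rdiv_le_0_compat; lra).
    apply Rabs_def2 in Hd. lra.
  - destruct (D (l / 2) ltac:(lra)) as [d Hd].
    set (h := Rmin (d / 2) (y / 2)).
    assert (Hh : 0 < h) by (unfold h; apply Rmin_pos; generalize (cond_pos d); lra).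
    assert (Hh2 : h <= d / 2) by apply Rmin_l.
    assert (Hh3 : h <= y / 2) by apply Rmin_r.
    specialize (Hd (- h) ltac:(lra) ltac:(rewrite Rabs_Ropp, Rabs_right; lra)).
    assert (0 <= g (y + - h)) by (apply Hg; lra).
    assert (0 <= (g (y + - h) - g y) / h) by (apply Rdiv_le_0_compat; lra).
    replace ((g (y + - h) - g y) / - h) with (- ((g (y + - h) - g y) / h)) in Hd
      by (field; lra).
    apply Rabs_def2 in Hd. lra.
Qed.

Lemma bounded_near_0 (g : R -> R) L : (forall x, 0 < x -> continuous g x) ->
  filterlim g (at_right 0) (locally L) ->
  exists C, 0 <= C /\ forall y, 0 < y <= 1 -> Rabs (g y) <= C.
Proof.
  intros Hc Hl.
  assert (Hb : at_right 0 (fun y => Rabs (g y - L) < 1)).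
  { apply (Hl (fun z => Rabs (z - L) < 1)). now exists (mkposreal 1 Rlt_0_1). }
  destruct Hb as [d Hd].
  set (a := Rmin (d / 2) 1).
  assert (Ha : 0 < a) by (unfold a; apply Rmin_pos; generalize (cond_pos d); lra).
  assert (Ha2 : a <= d / 2) by apply Rmin_l. assert (Ha1 : a <= 1) by apply Rmin_r.
  destruct (bounded_continuity (K := R_AbsRing) (V := R_NormedModule) g a 1) as [M HM].
  { intros x Hx. apply Hc. lra. }
  exists (Rmax (Rabs L + 1) M). split; [generalize (Rabs_pos L) (Rmax_l (Rabs L + 1) M); lra |].
  intros y Hy. destruct (Rlt_dec y a) as [H | H].
  - assert (Rabs (g y - L) < 1).
    { apply Hd; [| lra]. change (Rabs (y - 0) < d). rewrite Rminus_0_r, Rabs_right; lra. }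
    generalize (Rabs_triang_inv (g y) L) (Rmax_l (Rabs L + 1) M). lra.
  - generalize (HM y ltac:(lra)) (Rmax_r (Rabs L + 1) M). change (norm (g y)) with (Rabs (g y)).
    lra.
Qed.

Lemma not_cvg_of_derive_ge (f df : R -> R) c z0 L : 0 < c ->
  (forall x, z0 <= x -> is_derive f x (df x)) -> (forall x, z0 <= x -> c <= df x) ->
  ~ filterlim f (Rbar_locally p_infty) (locally L).
Proof.
  intros Hc D B HL.
  assert (HM : Rbar_locally p_infty (fun z => Rabs (f z - L) < 1)).
  { apply (HL (fun w => Rabs (w - L) < 1)). now exists (mkposreal 1 Rlt_0_1). }
  destruct HM as [M HM].
  set (z1 := Rmax M z0 + 1). set (z2 := z1 + 2 / c).
  assert (M < z1 /\ z0 < z1) by (unfold z1; generalize (Rmax_l M z0) (Rmax_r M z0); lra).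
  assert (0 < 2 / c) by (apply Rdiv_lt_0_compat; lra).
  assert (f z1 - c * z1 <= f z2 - c * z2).
  { apply (le_of_is_derive_ge0 (fun s => f s - c * s) (fun s => df s - c)); [unfold z2; lra | |].
    - intros x Hx. eapply is_derive_eq.
      + apply is_derive_Rminus; [apply D; lra | apply is_derive_scal, is_derive_Rid].
      + ring.
    - intros x Hx. generalize (B x ltac:(lra)). lra. }
  generalize (HM z1 ltac:(lra)) (HM z2 ltac:(unfold z2; lra)). intros A1 A2.
  apply Rabs_def2 in A1. apply Rabs_def2 in A2.
  assert (c * (z2 - z1) = 2) by (unfold z2; field; lra). lra.
Qed.

(* [E exp (-K s)] is nonincreasing and [E exp (K s)] nondecreasing, so the zero of [E]
   at [y1] propagates in both directions. *)
Lemma gronwall_zero (E dE : R -> R) K a b y1 : a <= y1 <= b -> 0 <= K ->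
  (forall x, a <= x <= b -> is_derive E x (dE x)) ->
  (forall x, a <= x <= b -> Rabs (dE x) <= K * E x) ->
  (forall x, a <= x <= b -> 0 <= E x) -> E y1 = 0 -> forall x, a <= x <= b -> E x = 0.
Proof.
  intros Hy HK D B P Z x Hx. apply Rle_antisym; [| now apply P].
  assert (Dexp : forall k s, is_derive (fun s => exp (k * s)) s (k * exp (k * s))).
  { intros k s. eapply is_derive_eq.
    - apply (is_derive_Rcomp exp), is_derive_scal, is_derive_Rid. apply is_derive_exp.
    - ring. }
  destruct (Rle_dec y1 x) as [Hxy | Hxy].
  - assert (A : - (E y1 * exp (- K * y1)) <= - (E x * exp (- K * x))).
    { apply (le_of_is_derive_ge0 (fun s => - (E s * exp (- K * s)))
        (fun s => - ((dE s - K * E s) * exp (- K * s)))); auto.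
      - intros s Hs. eapply is_derive_eq.
        + apply is_derive_Ropp, is_derive_Rmult; [apply D; lra | apply Dexp].
        + cbv beta; ring.
      - intros s Hs. generalize (B s ltac:(lra)) (exp_pos (- K * s)). intros B1 B2.
        apply Rabs_le_between in B1. assert (dE s - K * E s <= 0) by lra. nra. }
    rewrite Z in A. generalize (exp_pos (- K * x)). nra.
  - assert (A : E x * exp (K * x) <= E y1 * exp (K * y1)).
    { apply (le_of_is_derive_ge0 (fun s => E s * exp (K * s))
        (fun s => (dE s + K * E s) * exp (K * s))); [lra | |].
      - intros s Hs. eapply is_derive_eq.
        + apply is_derive_Rmult; [apply D; lra | apply Dexp].
        + cbv beta; ring.
      - intros s Hs. generalize (B s ltac:(lra)) (exp_pos (K * s)). intros B1 B2.
        apply Rabs_le_between in B1. assert (0 <= dE s + K * E s) by lra. nra. }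
    rewrite Z in A. generalize (exp_pos (K * x)). nra.
Qed.

(* Since [h >= 0], the integral over [[a, b]] grows with the interval; the improper
   integral is the supremum of these integrals. *)
Lemma is_RInt_gen_of_bounded_RInt (h : R -> R) M :
  (forall a b, 0 < a -> a < b -> ex_RInt h a b) -> (forall y, 0 < y -> 0 <= h y) ->
  (forall a b, 0 < a -> a < b -> RInt h a b <= M) ->
  exists v, is_RInt_gen h (at_right 0) (Rbar_locally p_infty) v /\ v <= M.
Proof.
  intros Hex Hpos HM.
  assert (HR : forall a b, 0 < a -> a <= b -> 0 <= RInt h a b).
  { intros a b Ha Hab. destruct (Req_dec a b) as [-> | Hne]; [rewrite RInt_point; apply Rle_refl |].
    apply RInt_ge_0; [lra | apply Hex; lra | intros x Hx; apply Hpos; lra]. }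
  set (E := fun r => exists a b, 0 < a /\ a < b /\ r = RInt h a b).
  assert (bE : bound E) by (exists M; intros r [a [b [Ha [Hab ->]]]]; auto).
  assert (nE : exists r, E r) by (exists (RInt h 1 2), 1, 2; repeat split; lra || reflexivity).
  destruct (completeness E bE nE) as [l [Hub Hlub]].
  exists l. split; [| apply Hlub; intros r [a [b [Ha [Hab ->]]]]; auto].
  intros P [eps HP].
  assert (Hex1 : exists a0 b0, 0 < a0 /\ a0 < b0 /\ l - eps < RInt h a0 b0).
  { apply NNPP. intros X. assert (U : is_upper_bound E (l - eps)).
    { intros r [a [b [Ha [Hab ->]]]]. apply Rnot_lt_le. intros Y. apply X. now exists a, b. }
    generalize (Hlub _ U) (cond_pos eps). lra. }
  destruct Hex1 as [a0 [b0 [Ha0 [Hab0 Hl0]]]].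
  apply (Filter_prod _ _ _ (fun a => 0 < a < a0) (fun b => b0 < b)).
  - exists (mkposreal a0 Ha0). intros y Hy Hy0. change (Rabs (y - 0) < a0) in Hy.
    rewrite Rminus_0_r, Rabs_right in Hy by lra. lra.
  - now exists b0.
  - intros a b [Ha1 Ha2] Hbb. simpl. exists (RInt h a b). split.
    + apply (@RInt_correct R_CompleteNormedModule), Hex; lra.
    + apply HP. change (Rabs (RInt h a b - l) < eps).
      assert (RInt h a b <= l) by (apply Hub; exists a, b; repeat split; lra).
      assert (RInt h a b = RInt h a a0 + RInt h a0 b0 + RInt h b0 b).
      { rewrite <- (RInt_Chasles h a b0 b), <- (RInt_Chasles h a a0 b0) by (apply Hex; lra).
        reflexivity. }
      generalize (HR a a0 ltac:(lra) ltac:(lra)) (HR b0 b ltac:(lra) ltac:(lra)).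
      intros. apply Rabs_lt_between. lra.
Qed.

Definition dom_profile (A B n y : R) := A / (1 + (n * y) ^ 2) + B / (n * (1 + y ^ 2)).

Lemma RInt_dom_profile A B n a b : 0 < n -> 0 <= A -> 0 <= B -> 0 < a -> a <= b ->
  ex_RInt (dom_profile A B n) a b /\ RInt (dom_profile A B n) a b <= 2 * (A + B) / n.
Proof.
  intros Hn HA HB Ha Hab.
  set (F y := A / n * atan (n * y) + B / n * atan y).
  assert (Pos : forall y, 0 < 1 + (n * y) ^ 2 /\ 0 < 1 + y ^ 2)
    by (intros y; generalize (pow2_ge_0 (n * y)) (pow2_ge_0 y); lra).
  assert (I : is_RInt (dom_profile A B n) a b (F b - F a)).
  { apply (is_RInt_derive F).
    - intros x _. unfold F, dom_profile. auto_derive; auto.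
      destruct (Pos x) as [P1 P2]. simpl in *. field. repeat split; lra.
    - intros x _. apply (ex_derive_continuous (V := R_NormedModule)). unfold dom_profile.
      destruct (Pos x) as [P1 P2]. auto_derive. repeat split; try lra; nra. }
  split; [eexists; exact I |]. rewrite (is_RInt_unique _ _ _ _ I).
  unfold F. generalize (atan_bound (n * b)) (atan_bound b) PI_4. intros [_ X1] [_ X2] X3.
  assert (0 < atan (n * a)) by (rewrite <- atan_0; apply atan_increasing; nra).
  assert (0 < atan a) by (rewrite <- atan_0; apply atan_increasing; lra).
  assert (0 <= A / n) by (apply Rdiv_le_0_compat; lra).
  assert (0 <= B / n) by (apply Rdiv_le_0_compat; lra).
  replace (2 * (A + B) / n) with (A / n * 2 + B / n * 2) by (field; lra). nra.
Qed.

Lemma is_RInt_gen_of_dominated (h : R -> R) A B n : 0 < n -> 0 <= A -> 0 <= B ->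
  (forall a b, 0 < a -> a < b -> ex_RInt h a b) ->
  (forall y, 0 < y -> 0 <= h y <= dom_profile A B n y) ->
  exists v, is_RInt_gen h (at_right 0) (Rbar_locally p_infty) v /\ v <= 2 * (A + B) / n.
Proof.
  intros Hn HA HB Hex Hb. apply is_RInt_gen_of_bounded_RInt; auto.
  - intros y Hy. apply Hb, Hy.
  - intros a b Ha Hab. destruct (RInt_dom_profile A B n a b) as [I1 I2]; try lra.
    eapply Rle_trans; [| exact I2].
    apply RInt_le; [lra | auto | auto | intros x Hx; apply Hb; lra].
Qed.

Definition gauss (y : R) := exp (- (y ^ 2) / 4).

Lemma rho_gauss y : rho y = y ^ 2 * gauss y.
Proof. reflexivity. Qed.

Lemma gauss_pos y : 0 < gauss y.
Proof. apply exp_pos. Qed.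

Lemma is_derive_gauss y : is_derive gauss y (- y / 2 * gauss y).
Proof.
  unfold gauss. auto_derive; auto.
  replace (- (y * (y * 1)) * / 4) with (- (y ^ 2) / 4) by (simpl; field). field.
Qed.

Lemma is_derive_rho y : is_derive rho y (2 * y * gauss y + y ^ 2 * (- y / 2 * gauss y)).
Proof.
  eapply is_derive_eq.
  - apply (is_derive_Rmult (fun y => y ^ 2) gauss); [auto_derive; auto | apply is_derive_gauss].
  - simpl. ring.
Qed.

Lemma continuity_rho y : continuity_pt rho y.
Proof. exact (is_derive_continuity_pt _ _ _ (is_derive_rho y)). Qed.

Lemma rho_le_sq y : 0 <= rho y <= y ^ 2.
Proof.
  rewrite rho_gauss. assert (0 < gauss y) by apply gauss_pos.
  assert (gauss y <= 1).
  { unfold gauss. rewrite <- exp_0. destruct (Req_dec (y ^ 2) 0) as [E | E].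
    - rewrite E. replace (- 0 / 4) with 0 by field. lra.
    - left. apply exp_increasing. generalize (pow2_ge_0 y). lra. }
  generalize (pow2_ge_0 y). nra.
Qed.

Lemma rho_le_4 y : rho y <= 4.
Proof.
  rewrite rho_gauss. unfold gauss.
  assert (E : exp (- (y ^ 2) / 4) * exp (y ^ 2 / 4) = 1)
    by (rewrite <- exp_plus; replace (- (y ^ 2) / 4 + y ^ 2 / 4) with 0 by field; apply exp_0).
  generalize (exp_ineq1_le (y ^ 2 / 4)) (pow2_ge_0 y) (exp_pos (- (y ^ 2) / 4)). nra.
Qed.

Lemma rho_decay : exists K, 0 < K /\ forall y, 1 <= y -> rho y <= K / y ^ 3.
Proof.
  destruct (pow_le_mult_exp 3) as [K0 [HK0 B]].
  exists (64 * K0). split; [lra |]. intros y Hy.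
  specialize (B (y ^ 2 / 4) ltac:(generalize (pow2_ge_0 y); lra)).
  rewrite rho_gauss. unfold gauss.
  assert (E : exp (- y ^ 2 / 4) * exp (y ^ 2 / 4) = 1)
    by (rewrite <- exp_plus; replace (- y ^ 2 / 4 + y ^ 2 / 4) with 0 by field; apply exp_0).
  set (u := exp (y ^ 2 / 4)) in *. set (v := exp (- y ^ 2 / 4)) in *.
  assert (Hu : 0 < u) by apply exp_pos.
  assert (Hy3 : 0 < y ^ 3) by (apply pow_lt; lra).
  replace ((y ^ 2 / 4) ^ 3) with (y ^ 6 / 64) in B by (simpl; field).
  apply Rmult_le_reg_r with (y ^ 3 * u); [apply Rmult_lt_0_compat; lra |].
  replace (y ^ 2 * v * (y ^ 3 * u)) with (y ^ 5 * (v * u)) by ring. rewrite E.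
  replace (64 * K0 / y ^ 3 * (y ^ 3 * u)) with (64 * (K0 * u)) by (field; lra).
  assert (y ^ 5 <= y ^ 6) by (apply Rle_pow; [lra | lia]). lra.
Qed.

Lemma sq_rho_le_near0 u y m A : 0 < y -> 0 <= m * y <= 3 -> Rabs u * y <= A ->
  u ^ 2 * rho y <= 10 * A ^ 2 / (1 + (m * y) ^ 2).
Proof.
  intros Hy Hmy Hu. generalize (rho_le_sq y) (pow2_ge_0 u) (pow2_ge_0 (m * y)). intros [R1 R2] U P.
  assert (X : u ^ 2 * rho y <= A ^ 2).
  { apply Rle_trans with ((Rabs u * y) ^ 2).
    - rewrite Rpow_mult_distr, pow2_abs. now apply Rmult_le_compat_l.
    - apply pow_incr. split; auto. apply Rmult_le_pos; [apply Rabs_pos | lra]. }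
  assert ((m * y) ^ 2 <= 9) by (simpl; nra).
  apply Rle_trans with (A ^ 2); auto.
  apply Rmult_le_reg_r with (1 + (m * y) ^ 2); [lra |].
  replace (10 * A ^ 2 / (1 + (m * y) ^ 2) * (1 + (m * y) ^ 2)) with (10 * A ^ 2) by (field; lra).
  generalize (pow2_ge_0 A). nra.
Qed.

Lemma sq_rho_le_far u y m B K : 1 <= m <= y -> 0 <= K -> Rabs u <= B -> rho y <= K / y ^ 3 ->
  u ^ 2 * rho y <= 2 * K * B ^ 2 / (m * (1 + y ^ 2)).
Proof.
  intros Hmy HK Hu Hrho. generalize (rho_le_sq y) (pow2_ge_0 u) (pow2_ge_0 y). intros [R1 R2] U P.
  assert (X : u ^ 2 <= B ^ 2) by (rewrite <- pow2_abs; apply pow_incr; split; auto using Rabs_pos).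
  assert (Hy3 : 0 < y ^ 3) by (apply pow_lt; lra).
  assert (X3 : K / y ^ 3 <= 2 * K / (m * (1 + y ^ 2))).
  { apply Rmult_le_reg_r with (y ^ 3 * (m * (1 + y ^ 2)));
      [apply Rmult_lt_0_compat; [lra | apply Rmult_lt_0_compat; lra] |].
    replace (K / y ^ 3 * (y ^ 3 * (m * (1 + y ^ 2)))) with (K * (m * (1 + y ^ 2)))
      by (field; lra).
    replace (2 * K / (m * (1 + y ^ 2)) * (y ^ 3 * (m * (1 + y ^ 2)))) with (K * (2 * y ^ 3))
      by (field; split; lra).
    apply Rmult_le_compat_l; [lra |]. simpl. nra. }
  replace (2 * K * B ^ 2 / (m * (1 + y ^ 2))) with (B ^ 2 * (2 * K / (m * (1 + y ^ 2))))
    by (field; split; lra).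
  assert (u ^ 2 * rho y <= B ^ 2 * (K / y ^ 3)) by (apply Rmult_le_compat; auto).
  generalize (pow2_ge_0 B). nra.
Qed.

Lemma sq_rho_le_dom_profile (e : R -> R) m A B K : 3 <= m -> 0 <= A -> 0 <= B -> 0 < K ->
  (forall y, 1 <= y -> rho y <= K / y ^ 3) ->
  (forall y, 0 < y <= 3 / m -> Rabs (e y) * y <= A) ->
  (forall y, 3 / m < y < m -> e y = 0) ->
  (forall y, m <= y -> Rabs (e y) <= B) ->
  forall y, 0 < y -> 0 <= e y ^ 2 * rho y <= dom_profile (10 * A ^ 2) (2 * K * B ^ 2) m y.
Proof.
  intros Hm HA HB HK Hrho H1 H2 H3 y Hy.
  generalize (rho_le_sq y) (pow2_ge_0 (e y)). intros [R1 R2] E0.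
  assert (G1 : 0 <= 10 * A ^ 2 / (1 + (m * y) ^ 2))
    by (apply Rdiv_le_0_compat; generalize (pow2_ge_0 A) (pow2_ge_0 (m * y)); lra).
  assert (G2 : 0 <= 2 * K * B ^ 2 / (m * (1 + y ^ 2)))
    by (apply Rdiv_le_0_compat; generalize (pow2_ge_0 B) (pow2_ge_0 y); nra).
  split; [now apply Rmult_le_pos |]. unfold dom_profile.
  destruct (Rle_dec y (3 / m)) as [C1 | C1]; [| destruct (Rlt_dec y m) as [C2 | C2]].
  - assert (m * y <= 3)
      by (replace 3 with (m * (3 / m)) by (field; lra); apply Rmult_le_compat_l; lra).
    assert (e y ^ 2 * rho y <= 10 * A ^ 2 / (1 + (m * y) ^ 2))
      by (apply sq_rho_le_near0; [exact Hy | split; [nra | lra] | apply H1; lra]).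
    lra.
  - rewrite H2 by lra. replace (0 ^ 2 * rho y) with 0 by ring. lra.
  - assert (e y ^ 2 * rho y <= 2 * K * B ^ 2 / (m * (1 + y ^ 2)))
      by (apply sq_rho_le_far; [lra | lra | apply H3; lra | apply Hrho; lra]).
    lra.
Qed.

Lemma ex_RInt_sq_rho (e : R -> R) : (forall y, 0 < y -> continuity_pt e y) ->
  forall a b, 0 < a -> a < b -> ex_RInt (fun y => e y ^ 2 * rho y) a b.
Proof.
  intros He a b Ha Hab. apply (@ex_RInt_continuous R_CompleteNormedModule).
  intros z Hz. rewrite Rmin_left, Rmax_right in Hz by lra.
  apply continuity_pt_filterlim, continuity_pt_mult; [| apply continuity_rho].
  apply (continuity_pt_comp e (fun u => u ^ 2)); [apply He; lra |].
  apply derivable_continuous_pt, derivable_pt_pow.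
Qed.

Lemma l2rho_sq_le_weaken h a b : l2rho_sq_le h a -> a <= b -> l2rho_sq_le h b.
Proof. intros [v [Hv Hva]] Hab. exists v. split; [exact Hv | lra]. Qed.

Lemma l2rho_regions_le A B : 0 <= A -> 0 <= B -> exists T, 0 <= T /\
  forall (e : R -> R) m, 3 <= m ->
  (forall a b, 0 < a -> a < b -> ex_RInt (fun y => e y ^ 2 * rho y) a b) ->
  (forall y, 0 < y <= 3 / m -> Rabs (e y) * y <= A) ->
  (forall y, 3 / m < y < m -> e y = 0) ->
  (forall y, m <= y -> Rabs (e y) <= B) ->
  l2rho_sq_le e (T / m).
Proof.
  intros HA HB. destruct rho_decay as [K [HK HKd]].
  exists (2 * (10 * A ^ 2 + 2 * K * B ^ 2)).
  split; [generalize (pow2_ge_0 A) (pow2_ge_0 B); nra |].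
  intros e m Hm Hint H1 H2 H3.
  destruct (is_RInt_gen_of_dominated (fun y => e y ^ 2 * rho y) (10 * A ^ 2) (2 * K * B ^ 2) m)
    as [v [Hv Hvb]]; auto; try lra.
  - generalize (pow2_ge_0 A). lra.
  - generalize (pow2_ge_0 B). nra.
  - intros y Hy. apply (sq_rho_le_dom_profile e m A B K); auto.
  - exists v. split; [exact Hv | lra].
Qed.

Lemma Rinv_in_01 z : 1 <= z -> 0 < / z <= 1.
Proof.
  intros Hz. split; [apply Rinv_0_lt_compat; lra |].
  rewrite <- Rinv_1. apply Rinv_le_contravar; lra.
Qed.

Lemma Rabs_mult_le a b A B : Rabs a <= A -> Rabs b <= B -> Rabs (a * b) <= A * B.
Proof. intros H1 H2. rewrite Rabs_mult. apply Rmult_le_compat; auto; apply Rabs_pos. Qed.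

Lemma Rabs_sub_sub_le a b e : Rabs (a - b - e) <= Rabs a + Rabs b + Rabs e.
Proof.
  unfold Rminus. eapply Rle_trans; [apply Rabs_triang |]. rewrite Rabs_Ropp.
  apply Rplus_le_compat_r. eapply Rle_trans; [apply Rabs_triang |]. rewrite Rabs_Ropp. lra.
Qed.

Lemma Rabs_add_sub_le a b e : Rabs (a + b - e) <= Rabs a + Rabs b + Rabs e.
Proof.
  unfold Rminus. eapply Rle_trans; [apply Rabs_triang |]. rewrite Rabs_Ropp.
  apply Rplus_le_compat_r, Rabs_triang.
Qed.

(* [(1 - c) w - c'' w - c' ((2/y - y/2) w + 2 w')] is [A0 (c w) + w] when [A0 w = - w]. *)
Lemma cutoff_residual_near0_bound w dw c c1 c2 y m C M1 M2 d1 d2 :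
  0 < y <= 1 -> 0 <= m -> m * y <= 3 -> 0 <= C -> 0 <= M1 -> 0 <= M2 ->
  Rabs w <= C * y -> Rabs dw <= 2 * C -> 0 <= c <= 1 ->
  c1 = m * d1 -> Rabs d1 <= M1 -> c2 = m ^ 2 * d2 -> Rabs d2 <= M2 ->
  Rabs ((1 - c) * w - c2 * w - c1 * ((2 / y - y / 2) * w + 2 * dw)) * y
  <= C + 9 * M2 * C + 18 * M1 * C.
Proof.
  intros Hy Hm Hmy HC HM1 HM2 Hw Hdw Hc E1 Hd1 E2 Hd2. subst c1 c2.
  assert (Hmy0 : 0 <= m * y) by (apply Rmult_le_pos; lra).
  assert (T1 : Rabs ((1 - c) * w) * y <= C).
  { rewrite Rabs_mult, (Rabs_right (1 - c)) by lra.
    assert ((1 - c) * Rabs w <= 1 * (C * y)) by (apply Rmult_le_compat; try lra; apply Rabs_pos).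
    assert (C * y * y <= C * 1 * 1) by (apply Rmult_le_compat; nra). nra. }
  assert (T2 : Rabs (m ^ 2 * d2 * w) * y <= 9 * M2 * C).
  { rewrite !Rabs_mult, (Rabs_right (m ^ 2)) by (apply Rle_ge, pow2_ge_0).
    assert (Rabs d2 * Rabs w <= M2 * (C * y)) by (apply Rmult_le_compat; auto; apply Rabs_pos).
    replace (m ^ 2 * Rabs d2 * Rabs w * y) with ((m * y) * (m * (Rabs d2 * Rabs w))) by ring.
    apply Rle_trans with ((m * y) * (m * (M2 * (C * y)))).
    { apply Rmult_le_compat_l; auto. apply Rmult_le_compat_l; auto. }
    replace ((m * y) * (m * (M2 * (C * y)))) with ((m * y) * (m * y) * (M2 * C)) by ring.
    assert (0 <= M2 * C) by nra. assert ((m * y) * (m * y) <= 9) by nra. nra. }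
  assert (Tp : Rabs ((2 / y - y / 2) * w) <= 2 * C).
  { rewrite Rabs_mult. apply Rle_trans with (Rabs (2 / y - y / 2) * (C * y)).
    { apply Rmult_le_compat_l; auto. apply Rabs_pos. }
    replace (Rabs (2 / y - y / 2) * (C * y)) with (Rabs (2 - y ^ 2 / 2) * C).
    2:{ replace (2 - y ^ 2 / 2) with ((2 / y - y / 2) * y) by (field; lra).
        rewrite Rabs_mult, (Rabs_right y) by lra. ring. }
    apply Rmult_le_compat_r; auto. apply Rabs_le. split; nra. }
  assert (T3 : Rabs (m * d1 * ((2 / y - y / 2) * w + 2 * dw)) * y <= 18 * M1 * C).
  { rewrite !Rabs_mult, (Rabs_right m) by lra.
    assert (Rabs ((2 / y - y / 2) * w + 2 * dw) <= 6 * C).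
    { eapply Rle_trans; [apply Rabs_triang |]. rewrite (Rabs_mult 2), (Rabs_right 2) by lra. lra. }
    replace (m * Rabs d1 * Rabs ((2 / y - y / 2) * w + 2 * dw) * y)
      with ((m * y) * (Rabs d1 * Rabs ((2 / y - y / 2) * w + 2 * dw))) by ring.
    apply Rle_trans with (3 * (M1 * (6 * C))); [| lra].
    apply Rmult_le_compat; auto.
    - apply Rmult_le_pos; apply Rabs_pos.
    - apply Rmult_le_compat; auto; apply Rabs_pos. }
  eapply Rle_trans; [apply Rmult_le_compat_r; [lra | apply Rabs_sub_sub_le] |].
  rewrite !Rmult_plus_distr_r. lra.
Qed.

Lemma cutoff_residual_far_bound w dw c c1 c2 y m M1 M2 d1 d2 :
  1 <= y -> 1 <= m -> 0 <= M1 -> 0 <= M2 ->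
  Rabs w <= 2 / y ^ 2 -> Rabs dw <= 8 -> 0 <= c <= 1 ->
  c1 = - d1 / m -> Rabs d1 <= M1 -> c2 = d2 / m ^ 2 -> Rabs d2 <= M2 ->
  Rabs ((1 - c) * w - c2 * w - c1 * ((2 / y - y / 2) * w + 2 * dw)) <= 2 + 2 * M2 + 21 * M1.
Proof.
  intros Hy Hm HM1 HM2 Hw Hdw Hc E1 Hd1 E2 Hd2.
  replace c1 with (- / m * d1) by (subst; unfold Rdiv; ring).
  replace c2 with (- / m * - / m * d2) by (subst; field; lra).
  assert (Hy2 : 1 <= y ^ 2) by (rewrite <- (pow1 2); apply pow_incr; lra).
  assert (Hy3 : 1 <= y ^ 3) by (rewrite <- (pow1 3); apply pow_incr; lra).
  assert (Hw2 : Rabs w <= 2) by (generalize (Rinv_in_01 _ Hy2); unfold Rdiv in Hw; nra).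
  assert (Hmi : Rabs (- / m) <= 1)
    by (rewrite Rabs_Ropp, Rabs_right by (generalize (Rinv_in_01 m Hm); lra);
        apply Rinv_in_01; lra).
  assert (T1 : Rabs ((1 - c) * w) <= 2).
  { rewrite Rabs_mult, (Rabs_right (1 - c)) by lra. generalize (Rabs_pos w). nra. }
  assert (T2 : Rabs (- / m * - / m * d2 * w) <= 2 * M2).
  { replace (2 * M2) with (1 * 1 * M2 * 2) by ring. repeat apply Rabs_mult_le; auto. }
  assert (Tp : Rabs ((2 / y - y / 2) * w) <= 5).
  { rewrite Rabs_mult. apply Rle_trans with ((2 / y + y / 2) * (2 / y ^ 2)).
    - apply Rmult_le_compat; try apply Rabs_pos; auto.
      apply Rabs_le. assert (0 < 2 / y) by (apply Rdiv_lt_0_compat; lra). split; lra.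
    - replace ((2 / y + y / 2) * (2 / y ^ 2)) with (4 * / y ^ 3 + / y) by (field; lra).
      generalize (Rinv_in_01 _ Hy3) (Rinv_in_01 _ Hy). lra. }
  assert (T3 : Rabs (- / m * d1 * ((2 / y - y / 2) * w + 2 * dw)) <= 21 * M1).
  { replace (21 * M1) with (1 * M1 * 21) by ring. apply Rabs_mult_le; [now apply Rabs_mult_le |].
    eapply Rle_trans; [apply Rabs_triang |]. rewrite (Rabs_mult 2), (Rabs_right 2) by lra. lra. }
  eapply Rle_trans; [apply Rabs_sub_sub_le | lra].
Qed.

Section Profile.

Variable f0 : R -> R.
Hypothesis Hsmooth : smooth_closed_halfline f0.
Hypothesis Hode : forall y, 0 < y ->
  Derive_n f0 2 y + (2 / y - y / 2) * Derive f0 y - sin (2 * f0 y) / y ^ 2 = 0.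
Hypothesis H0 : f0 0 = 0.
Hypothesis Hinf : exists L, filterlim f0 (Rbar_locally p_infty) (locally L).
Hypothesis Hmono : monotone_halfline f0.
Hypothesis Hclose : weighted_norm_le (fun y => f0 y - ftilde y) (5 / 10000).

Definition df0 := Derive f0.
Definition d2f0 := Derive df0.

Lemma smooth_on_f0 : smooth_on (fun x => 0 < x) f0.
Proof. intros n k x _ Hx. now apply (proj1 Hsmooth). Qed.

Lemma smooth_on_df0 : smooth_on (fun x => 0 < x) df0.
Proof. apply smooth_on_Derive, smooth_on_f0. Qed.

Lemma smooth_on_d2f0 : smooth_on (fun x => 0 < x) d2f0.
Proof. apply smooth_on_Derive, smooth_on_df0. Qed.

Lemma is_derive_f0 y : 0 < y -> is_derive f0 y (df0 y).
Proof. intros Hy. apply Derive_correct, (ex_derive_of_smooth_on _ _ y smooth_on_f0 Hy). Qed.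

Lemma is_derive_df0 y : 0 < y -> is_derive df0 y (d2f0 y).
Proof. intros Hy. apply Derive_correct, (ex_derive_of_smooth_on _ _ y smooth_on_df0 Hy). Qed.

Lemma is_derive_d2f0 y : 0 < y -> is_derive d2f0 y (Derive d2f0 y).
Proof. intros Hy. apply Derive_correct, (ex_derive_of_smooth_on _ _ y smooth_on_d2f0 Hy). Qed.

Lemma d2f0_eq y : 0 < y -> d2f0 y = sin (2 * f0 y) / y ^ 2 - (2 / y - y / 2) * df0 y.
Proof.
  intros Hy. generalize (Hode y Hy).
  replace (Derive_n f0 2 y) with (d2f0 y) by (apply Derive_ext; reflexivity).
  fold df0. lra.
Qed.

Lemma f0_y_half : 1 / 2 < f0 y_half.
Proof.
  destruct Hclose as [a [b [Hab [Ha Hb]]]].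
  assert (0 <= b) by (eapply Rle_trans; [apply Rabs_pos | exact (Hb 1 Rlt_0_1)]).
  specialize (Ha y_half y_half_pos).
  generalize p1_y_half ftilde_y_half (Rabs_pos (f0 y_half - ftilde y_half)). intros P F Q.
  rewrite Rabs_mult, (Rabs_right (p1 y_half)) in Ha by lra.
  assert (Rabs (f0 y_half - ftilde y_half) <= a) by nra.
  apply Rabs_le_between in H1. lra.
Qed.

Lemma f0_nondecreasing a b : 0 <= a <= b -> f0 a <= f0 b.
Proof.
  destruct Hmono as [H | H]; auto. exfalso.
  generalize (H 0 y_half ltac:(generalize y_half_pos; lra)) f0_y_half. rewrite H0. lra.
Qed.

Lemma df0_ge0 y : 0 < y -> 0 <= df0 y.
Proof.
  intros Hy. apply (is_derive_ge0_of_nondecreasing f0 y); auto.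
  - exact f0_nondecreasing.
  - now apply is_derive_f0.
Qed.

Lemma is_derive_rho_df0 s : 0 < s ->
  is_derive (fun s => rho s * df0 s) s (gauss s * sin (2 * f0 s)).
Proof.
  intros Hs. eapply is_derive_eq.
  - apply is_derive_Rmult; [apply is_derive_rho | now apply is_derive_df0].
  - rewrite d2f0_eq, rho_gauss by exact Hs. field. lra.
Qed.

(* [rho f0' - (2/y) gauss] is nondecreasing on [[y, oo)] because [gauss s * sin (2 f0 s)]
   is at least [- gauss s], while [(2/y) gauss] decreases at rate [(s/y) gauss s]. *)
Lemma df0_decay y : 0 < y -> df0 y <= 2 / y ^ 3.
Proof.
  intros Hy. apply Rnot_lt_le. intros Hd.
  set (H s := rho s * df0 s - 2 / y * gauss s).
  assert (HH : forall z, y <= z -> H y <= H z).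
  { intros z Hz. apply (le_of_is_derive_ge0 H (fun s => gauss s * (sin (2 * f0 s) + s / y))); auto.
    - intros x Hx. unfold H. eapply is_derive_eq.
      + apply is_derive_Rminus; [apply is_derive_rho_df0; lra |].
        apply is_derive_scal, is_derive_gauss.
      + field. lra.
    - intros x Hx. apply Rmult_le_pos; [left; apply gauss_pos |].
      generalize (SIN_bound (2 * f0 x)).
      assert (1 <= x / y) by (apply Rmult_le_reg_r with y; [lra | field_simplify; lra]).
      lra. }
  assert (Hdp : 0 < H y).
  { unfold H. rewrite rho_gauss.
    assert (0 < y ^ 2 * gauss y)
      by (apply Rmult_lt_0_compat; [apply pow_lt; lra | apply gauss_pos]).
    assert (Lt : y ^ 2 * gauss y * (2 / y ^ 3) < y ^ 2 * gauss y * df0 y)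
      by (apply Rmult_lt_compat_l; auto).
    replace (y ^ 2 * gauss y * (2 / y ^ 3)) with (2 / y * gauss y) in Lt by (field; lra). lra. }
  destruct Hinf as [L HL].
  apply (not_cvg_of_derive_ge f0 df0 (H y / 4) y L); auto; [lra | |].
  - intros x Hx. apply is_derive_f0. lra.
  - intros x Hx. specialize (HH x Hx). unfold H in HH |- *.
    assert (0 <= 2 / y * gauss x)
      by (apply Rmult_le_pos; [apply Rdiv_le_0_compat; lra | left; apply gauss_pos]).
    generalize (rho_le_4 x) (df0_ge0 x ltac:(lra)). intros A B.
    assert (rho x * df0 x <= 4 * df0 x) by (apply Rmult_le_compat_r; auto). lra.
Qed.

(* The key bound is [|sin (2 f0)| = |sin (2 f0) - sin (2 c)| <= 2 |f0 - c|]. *)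
Lemma energy_derive_bound a b s c : 0 < a -> a <= s <= b -> sin (2 * c) = 0 ->
  Rabs (2 * (f0 s - c) * df0 s + 2 * df0 s * d2f0 s) <=
  (1 + 2 / a ^ 2 + 2 * (2 / a + b / 2)) * ((f0 s - c) ^ 2 + df0 s ^ 2).
Proof.
  intros Ha Hs Hc. rewrite d2f0_eq by lra.
  set (g := f0 s - c). set (v := df0 s). set (S := sin (2 * f0 s)).
  set (p := 2 / s - s / 2). set (q := / s ^ 2).
  assert (HS : Rabs S <= 2 * Rabs g).
  { unfold S. replace (sin (2 * f0 s)) with (sin (2 * f0 s) - sin (2 * c)) by lra.
    eapply Rle_trans; [apply Rabs_sin_sub_le |].
    replace (2 * f0 s - 2 * c) with (2 * g) by (unfold g; ring).
    rewrite Rabs_mult, Rabs_right; lra. }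
  assert (Hq : 0 < q <= / a ^ 2).
  { unfold q. split; [apply Rinv_0_lt_compat, pow_lt; lra |].
    apply Rinv_le_contravar; [apply pow_lt; lra | apply pow_incr; lra]. }
  assert (Hp : Rabs p <= 2 / a + b / 2).
  { assert (2 / s <= 2 / a) by (apply Rmult_le_compat_l; [lra | apply Rinv_le_contravar; lra]).
    assert (0 < 2 / s) by (apply Rdiv_lt_0_compat; lra).
    apply Rabs_le. unfold p. lra. }
  replace (2 * g * v + 2 * v * (S / s ^ 2 - p * v))
    with (2 * (g * v) + 2 * q * (v * S) - 2 * p * (v * v)) by (unfold q; field; lra).
  rewrite <- (pow2_abs g), <- (pow2_abs v).
  set (G := Rabs g). set (V := Rabs v).
  assert (HG : 0 <= G) by apply Rabs_pos. assert (HV : 0 <= V) by apply Rabs_pos.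
  assert (AMGM : 2 * (G * V) <= G ^ 2 + V ^ 2) by (generalize (pow2_ge_0 (G - V)); nra).
  assert (T : Rabs (2 * (g * v) + 2 * q * (v * S) - 2 * p * (v * v))
              <= 2 * (G * V) + 2 * q * (V * Rabs S) + 2 * Rabs p * (V * V)).
  { eapply Rle_trans; [apply Rabs_add_sub_le |].
    rewrite !Rabs_mult, (Rabs_right 2), (Rabs_right q) by lra. fold G V. lra. }
  assert (2 * q * (V * Rabs S) <= 2 / a ^ 2 * (G ^ 2 + V ^ 2)).
  { apply Rle_trans with (2 * q * (G ^ 2 + V ^ 2)); [| unfold Rdiv; nra].
    assert (V * Rabs S <= V * (2 * G)) by (apply Rmult_le_compat_l; auto).
    apply Rmult_le_compat_l; lra. }
  assert (2 * Rabs p * (V * V) <= 2 * (2 / a + b / 2) * (G ^ 2 + V ^ 2))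
    by (generalize (Rabs_pos p) (pow2_ge_0 G); simpl; nra).
  lra.
Qed.

Lemma f0_const_near_critical y1 : 0 < y1 -> df0 y1 = 0 ->
  forall a x, 0 < a <= y1 -> a <= x <= y1 + y_half -> f0 x = f0 y1.
Proof.
  intros Hy1 Hz a x Ha Hx.
  assert (Hdd : d2f0 y1 = 0)
    by (apply (is_derive_eq0_at_min df0 y1); auto using df0_ge0, is_derive_df0).
  assert (Hc : sin (2 * f0 y1) = 0).
  { generalize (d2f0_eq y1 Hy1). rewrite Hdd, Hz. intro E.
    assert (E' : sin (2 * f0 y1) * / y1 ^ 2 = 0) by (unfold Rdiv in E; lra).
    apply Rmult_integral in E' as [E' | E']; auto.
    exfalso. revert E'. apply Rinv_neq_0_compat, pow_nonzero. lra. }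
  set (b := y1 + y_half). set (c := f0 y1).
  set (K := 1 + 2 / a ^ 2 + 2 * (2 / a + b / 2)).
  assert (HK : 0 <= K).
  { assert (0 < 2 / a ^ 2) by (apply Rdiv_lt_0_compat; [lra | apply pow_lt; lra]).
    assert (0 < 2 / a) by (apply Rdiv_lt_0_compat; lra).
    generalize y_half_pos. unfold K, b. lra. }
  assert (Hb : a <= y1 <= b) by (generalize y_half_pos; unfold b; lra).
  assert (E0 : (f0 x - c) ^ 2 + df0 x ^ 2 = 0).
  { apply (gronwall_zero (fun s => (f0 s - c) ^ 2 + df0 s ^ 2)
      (fun s => 2 * (f0 s - c) * df0 s + 2 * df0 s * d2f0 s) K a b y1); auto.
    - intros s Hs. eapply is_derive_eq.
      + apply is_derive_Rplus; apply (is_derive_Rcomp (fun u => u ^ 2));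
          try (auto_derive; auto; fail).
        * apply is_derive_Rminus; [apply is_derive_f0; lra | apply is_derive_Rconst].
        * apply is_derive_df0. lra.
      + simpl. ring.
    - intros s Hs. apply energy_derive_bound; auto. lra.
    - intros s Hs. generalize (pow2_ge_0 (f0 s - c)) (pow2_ge_0 (df0 s)). lra.
    - unfold c. rewrite Hz. simpl. ring. }
  generalize (pow2_ge_0 (f0 x - c)) (pow2_ge_0 (df0 x)). intros A B.
  assert (E1 : (f0 x - c) ^ 2 = 0) by lra.
  destruct (Req_dec (f0 x - c) 0) as [Q | Q]; [lra |].
  exfalso. exact (pow_nonzero _ 2 Q E1).
Qed.

Lemma df0_pos y : 0 < y -> 0 < df0 y.
Proof.
  intros Hy. destruct (df0_ge0 y Hy) as [| Hz]; auto. exfalso.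
  assert (Hl : filterlim f0 (at_right 0) (locally 0))
    by (rewrite <- H0 at 2; exact (proj2 (proj2 Hsmooth))).
  destruct (Hl (fun z => Rabs (z - 0) < 1 / 4)) as [d Hd].
  { now exists (mkposreal (1 / 4) ltac:(lra)). }
  set (a := Rmin (d / 2) y).
  assert (Ha : 0 < a) by (unfold a; apply Rmin_pos; generalize (cond_pos d); lra).
  assert (Ha2 : a <= d / 2) by apply Rmin_l. assert (Ha1 : a <= y) by apply Rmin_r.
  assert (A1 : Rabs (f0 a - 0) < 1 / 4).
  { apply Hd; [| lra]. change (Rabs (a - 0) < d).
    rewrite Rminus_0_r, Rabs_right; generalize (cond_pos d); lra. }
  generalize y_half_pos (Rmin_l y y_half) (Rmin_r y y_half). intros.
  rewrite (f0_const_near_critical y Hy (eq_sym Hz) a a) in A1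
    by (generalize y_half_pos; lra).
  generalize f0_y_half.
  rewrite (f0_const_near_critical y Hy (eq_sym Hz) (Rmin y y_half) y_half)
    by (try split; try apply Rmin_pos; lra).
  rewrite Rminus_0_r in A1. apply Rabs_def2 in A1. lra.
Qed.

Definition W (y : R) := y * df0 y.
Definition dW (y : R) := df0 y + y * d2f0 y.

Lemma is_derive_W y : 0 < y -> is_derive W y (dW y).
Proof.
  intros Hy. eapply is_derive_eq.
  - apply is_derive_Rmult; [apply is_derive_Rid | now apply is_derive_df0].
  - unfold dW. ring.
Qed.

Lemma Derive_W y : 0 < y -> Derive W y = dW y.
Proof. intros Hy. now apply is_derive_unique, is_derive_W. Qed.

Lemma smooth_on_W : smooth_on (fun x => 0 < x) W.
Proof.
  apply smooth_on_mult; [apply open_gt | apply smooth_on_id | apply smooth_on_df0].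
Qed.

(* By the ODE, [rho W' = (y^2/2 - 1) rho f0' + rho sin (2 f0) / y]; differentiating
   once more gives the eigenvalue equation [A0 W = - W] in divergence form. *)
Lemma is_derive_rho_DW y : 0 < y -> is_derive (fun z => rho z * Derive W z) y
  (rho y * W y + 2 * rho y * cos (2 * f0 y) * W y / y ^ 2).
Proof.
  intros Hy.
  apply is_derive_Rext_loc with
    (fun z => (z ^ 2 / 2 - 1) * (rho z * df0 z) + rho z * sin (2 * f0 z) * / z).
  { apply locally_pos; auto. intros z Hz.
    rewrite Derive_W by exact Hz. unfold dW. rewrite d2f0_eq by exact Hz. field. lra. }
  eapply is_derive_eq.
  - apply is_derive_Rplus; apply is_derive_Rmult.
    + auto_derive; auto; reflexivity.
    + apply is_derive_Rmult; [apply is_derive_rho | now apply is_derive_df0].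
    + apply is_derive_Rmult; [apply is_derive_rho |].
      apply (is_derive_Rcomp sin (fun z => 2 * f0 z)); [apply is_derive_sin |].
      apply is_derive_scal. now apply is_derive_f0.
    + apply is_derive_inv; [apply is_derive_Rid | lra].
  - rewrite d2f0_eq by exact Hy. unfold W. rewrite rho_gauss. simpl. field. lra.
Qed.

Definition cutoff_residual (m y : R) :=
  (1 - cutoff m y) * W y - d2cutoff m y * W y
  - dcutoff m y * ((2 / y - y / 2) * W y + 2 * dW y).

Lemma A0_cutoff_W m y : 0 < m -> 0 < y ->
  A0 f0 (fun z => cutoff m z * W z) y - (-1 * W y) = cutoff_residual m y.
Proof.
  intros Hm Hy. unfold A0.
  assert (DcW : forall z, 0 < z ->
    Derive (fun z => cutoff m z * W z) z = dcutoff m z * W z + cutoff m z * dW z).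
  { intros z Hz. apply is_derive_unique. eapply is_derive_eq.
    - apply is_derive_Rmult; [apply is_derive_cutoff | now apply is_derive_W].
    - ring. }
  replace (Derive (fun z => rho z * Derive (fun z => cutoff m z * W z) z) y)
    with (d2cutoff m y * (rho y * W y)
          + dcutoff m y * ((2 * y * gauss y + y ^ 2 * (- y / 2 * gauss y)) * W y + rho y * dW y)
          + dcutoff m y * (rho y * dW y)
          + cutoff m y * (rho y * W y + 2 * rho y * cos (2 * f0 y) * W y / y ^ 2)).
  - unfold cutoff_residual. rewrite rho_gauss.
    assert (0 < gauss y) by apply gauss_pos. field. lra.
  - symmetry. apply is_derive_unique.
    apply is_derive_Rext_loc with
      (fun z => dcutoff m z * (rho z * W z) + cutoff m z * (rho z * Derive W z)).
    { apply locally_pos; auto. intros z Hz. rewrite DcW, Derive_W by exact Hz. ring. }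
    eapply is_derive_eq.
    + apply is_derive_Rplus; apply is_derive_Rmult.
      * apply is_derive_dcutoff. lra.
      * apply is_derive_Rmult; [apply is_derive_rho | now apply is_derive_W].
      * apply is_derive_cutoff.
      * now apply is_derive_rho_DW.
    + cbv beta. rewrite Derive_W by exact Hy. ring.
Qed.

Lemma W_near0 : exists C, 0 <= C /\
  forall y, 0 < y <= 1 -> Rabs (W y) <= C * y /\ Rabs (dW y) <= 2 * C.
Proof.
  assert (Lim : forall k, exists L, filterlim (Derive_n f0 (S k)) (at_right 0) (locally L))
    by (intros k; apply (proj1 (proj2 Hsmooth))).
  destruct (Lim 0%nat) as [L1 HL1]. destruct (Lim 1%nat) as [L2 HL2].
  destruct (bounded_near_0 df0 L1) as [C1 [HC1 B1]].
  { intros x Hx. apply (ex_derive_continuous (V := R_NormedModule)).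
    eexists. now apply is_derive_df0. }
  { apply (filterlim_ext (Derive_n f0 1)); [reflexivity | exact HL1]. }
  destruct (bounded_near_0 d2f0 L2) as [C2 [HC2 B2]].
  { intros x Hx. apply (ex_derive_continuous (V := R_NormedModule)).
    eexists. now apply is_derive_d2f0. }
  { apply (filterlim_ext (Derive_n f0 2)); [| exact HL2].
    intros x. apply Derive_ext. reflexivity. }
  set (C := Rmax C1 C2). generalize (Rmax_l C1 C2) (Rmax_r C1 C2). fold C. intros M1 M2.
  exists C. split; [lra |]. intros y Hy.
  specialize (B1 y Hy). specialize (B2 y Hy). unfold W, dW. split.
  - rewrite Rabs_mult, Rabs_right by lra. nra.
  - eapply Rle_trans; [apply Rabs_triang |]. rewrite Rabs_mult, (Rabs_right y) by lra.
    generalize (Rabs_pos (d2f0 y)). nra.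
Qed.

Lemma W_far y : 1 <= y -> 0 <= W y <= 2 / y ^ 2 /\ Rabs (dW y) <= 8.
Proof.
  intros Hy. generalize (df0_ge0 y ltac:(lra)) (df0_decay y ltac:(lra)). intros D1 D2.
  assert (Hy3 : 1 <= y ^ 3) by (rewrite <- (pow1 3); apply pow_incr; lra).
  unfold W, dW. split; [split |].
  - apply Rmult_le_pos; lra.
  - replace (2 / y ^ 2) with (y * (2 / y ^ 3)) by (field; lra). apply Rmult_le_compat_l; lra.
  - rewrite d2f0_eq by lra.
    replace (df0 y + y * (sin (2 * f0 y) / y ^ 2 - (2 / y - y / 2) * df0 y))
      with (sin (2 * f0 y) * / y + (y ^ 2 / 2 - 1) * df0 y) by (field; lra).
    eapply Rle_trans; [apply Rabs_triang |].
    assert (Rabs (sin (2 * f0 y) * / y) <= 1).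
    { rewrite Rabs_mult, (Rabs_right (/ y)) by (generalize (Rinv_in_01 y Hy); lra).
      generalize (SIN_bound (2 * f0 y)) (Rinv_in_01 y Hy). intros S I.
      assert (Rabs (sin (2 * f0 y)) <= 1) by (apply Rabs_le; lra).
      generalize (Rabs_pos (sin (2 * f0 y))). nra. }
    assert (Rabs ((y ^ 2 / 2 - 1) * df0 y) <= 7).
    { rewrite Rabs_mult, (Rabs_right (df0 y)) by lra.
      apply Rle_trans with ((y ^ 2 / 2 + 1) * (2 / y ^ 3)).
      - apply Rmult_le_compat; auto using Rabs_pos.
        apply Rabs_le. generalize (pow2_ge_0 y). lra.
      - replace ((y ^ 2 / 2 + 1) * (2 / y ^ 3)) with (/ y + 2 * / y ^ 3) by (field; lra).
        generalize (Rinv_in_01 y Hy) (Rinv_in_01 _ Hy3). lra. }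
    lra.
Qed.

Lemma continuity_W y : 0 < y -> continuity_pt W y.
Proof. intros Hy. exact (is_derive_continuity_pt _ _ _ (is_derive_W y Hy)). Qed.

Lemma continuity_dW y : 0 < y -> continuity_pt dW y.
Proof.
  intros Hy. apply continuity_pt_plus.
  - exact (is_derive_continuity_pt _ _ _ (is_derive_df0 y Hy)).
  - apply continuity_pt_mult; [apply derivable_continuous_pt, derivable_pt_id |].
    exact (is_derive_continuity_pt _ _ _ (is_derive_d2f0 y Hy)).
Qed.

Lemma continuity_cutoff_residual m y : 0 < m -> 0 < y -> continuity_pt (cutoff_residual m) y.
Proof.
  intros Hm Hy.
  assert (Cc : continuity_pt (cutoff m) y)
    by exact (is_derive_continuity_pt _ _ _ (is_derive_cutoff m y)).
  assert (Cd : continuity_pt (dcutoff m) y)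
    by exact (is_derive_continuity_pt _ _ _ (is_derive_dcutoff m y ltac:(lra))).
  generalize (continuity_d2cutoff m y) (continuity_W y Hy) (continuity_dW y Hy). intros.
  assert (Cp : continuity_pt (fun y => 2 / y - y / 2) y) by (reg; lra).
  unfold cutoff_residual.
  repeat first [ assumption | apply continuity_pt_minus | apply continuity_pt_plus
               | apply continuity_pt_mult | apply continuity_pt_const; now intros a b ].
Qed.

Lemma cutoff_W_error_regions m C : 3 <= m -> 0 <= C ->
  (forall y, 0 < y <= 1 -> Rabs (W y) <= C * y /\ Rabs (dW y) <= 2 * C) ->
  (forall y, 0 < y <= 3 / m -> Rabs (cutoff m y * W y - W y) * y <= C) /\
  (forall y, 3 / m < y < m -> cutoff m y * W y - W y = 0) /\
  (forall y, m <= y -> Rabs (cutoff m y * W y - W y) <= 2).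
Proof.
  intros Hm HC B0. assert (H3m : 3 / m <= 1) by (apply Rle_div_l; lra).
  assert (E : forall y, Rabs (cutoff m y * W y - W y) <= Rabs (W y)).
  { intros y. replace (cutoff m y * W y - W y) with ((cutoff m y - 1) * W y) by ring.
    rewrite Rabs_mult. generalize (cutoff_range m y) (Rabs_pos (W y)). intros.
    assert (Rabs (cutoff m y - 1) <= 1) by (apply Rabs_le; lra). nra. }
  split; [| split].
  - intros y Hy. destruct (B0 y ltac:(lra)) as [B1 _].
    generalize (E y) (Rabs_pos (cutoff m y * W y - W y)). nra.
  - intros y Hy. destruct (cutoff_middle m Hm y Hy) as [-> _]. ring.
  - intros y Hy. eapply Rle_trans; [apply E |].
    destruct (W_far y ltac:(lra)) as [[A1 A2] _]. rewrite Rabs_right by lra.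
    assert (1 <= y ^ 2) by (rewrite <- (pow1 2); apply pow_incr; lra).
    apply Rle_trans with (2 / y ^ 2); auto. apply Rle_div_l; lra.
Qed.

Lemma cutoff_residual_regions m C M1 M2 : 3 <= m -> 0 <= C -> 0 <= M1 -> 0 <= M2 ->
  (forall y, 0 < y <= 1 -> Rabs (W y) <= C * y /\ Rabs (dW y) <= 2 * C) ->
  (forall x, Rabs (dstep x) <= M1) -> (forall x, Rabs (d2step x) <= M2) ->
  (forall y, 0 < y <= 3 / m -> Rabs (cutoff_residual m y) * y <= C + 9 * M2 * C + 18 * M1 * C) /\
  (forall y, 3 / m < y < m -> cutoff_residual m y = 0) /\
  (forall y, m <= y -> Rabs (cutoff_residual m y) <= 2 + 2 * M2 + 21 * M1).
Proof.
  intros Hm HC HM1 HM2 B0 BM1 BM2. assert (H3m : 3 / m <= 1) by (apply Rle_div_l; lra).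
  split; [| split].
  - intros y Hy. destruct (cutoff_near0 m Hm y (proj1 Hy) (proj2 Hy)) as [_ [E1 E2]].
    destruct (B0 y ltac:(lra)) as [B1 B2].
    assert (m * y <= 3) by (replace 3 with (m * (3 / m)) by (field; lra);
                            apply Rmult_le_compat_l; lra).
    apply (cutoff_residual_near0_bound (W y) (dW y) (cutoff m y) (dcutoff m y) (d2cutoff m y)
      y m C M1 M2 (dstep (m * y - 1)) (d2step (m * y - 1))); auto using cutoff_range; lra.
  - intros y Hy. destruct (cutoff_middle m Hm y Hy) as [A [B C']].
    unfold cutoff_residual. rewrite A, B, C'. ring.
  - intros y Hy. destruct (cutoff_far m Hm y Hy) as [_ [E1 E2]].
    destruct (W_far y ltac:(lra)) as [[A1 A2] A3].
    apply (cutoff_residual_far_bound (W y) (dW y) (cutoff m y) (dcutoff m y) (d2cutoff m y)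
      y m M1 M2 (dstep (2 - y / m)) (d2step (2 - y / m)));
      auto using cutoff_range; try lra. rewrite Rabs_right; lra.
Qed.

Lemma l2rho_cutoff_W_error : exists T, 0 <= T /\
  forall m, 3 <= m -> l2rho_sq_le (fun y => cutoff m y * W y - W y) (T / m).
Proof.
  destruct W_near0 as [C [HC B0]].
  destruct (l2rho_regions_le C 2 HC ltac:(lra)) as [T [HT L]].
  exists T. split; [exact HT |]. intros m Hm.
  destruct (cutoff_W_error_regions m C Hm HC B0) as [R1 [R2 R3]].
  apply L; auto. apply ex_RInt_sq_rho. intros y Hy.
  apply continuity_pt_minus; [apply continuity_pt_mult |]; auto using continuity_W.
  exact (is_derive_continuity_pt _ _ _ (is_derive_cutoff m y)).
Qed.

Lemma l2rho_cutoff_residual : exists T, 0 <= T /\ forall m, 3 <= m ->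
  l2rho_sq_le (fun y => A0 f0 (fun z => cutoff m z * W z) y - -1 * W y) (T / m).
Proof.
  destruct W_near0 as [C [HC B0]].
  destruct dstep_bounded as [M1 [HM1 BM1]]. destruct d2step_bounded as [M2 [HM2 BM2]].
  destruct (l2rho_regions_le (C + 9 * M2 * C + 18 * M1 * C) (2 + 2 * M2 + 21 * M1))
    as [T [HT L]]; [nra | lra |].
  exists T. split; [exact HT |]. intros m Hm.
  destruct (cutoff_residual_regions m C M1 M2 Hm HC HM1 HM2 B0 BM1 BM2) as [R1 [R2 R3]].
  assert (E : forall y, 0 < y ->
    A0 f0 (fun z => cutoff m z * W z) y - -1 * W y = cutoff_residual m y)
    by (intros y Hy; apply A0_cutoff_W; lra).
  assert (0 < 3 / m) by (apply Rdiv_lt_0_compat; lra).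
  apply L; auto.
  - intros a b Ha Hab. apply (ex_RInt_ext (fun y => cutoff_residual m y ^ 2 * rho y)).
    + intros x Hx. rewrite Rmin_left, Rmax_right in Hx by lra. rewrite E by lra. reflexivity.
    + apply ex_RInt_sq_rho; auto. intros y Hy. apply continuity_cutoff_residual; lra.
  - intros y Hy. rewrite E by lra. auto.
  - intros y Hy. rewrite E by lra. auto.
  - intros y Hy. rewrite E by lra. auto.
Qed.

Lemma test_fn_cutoff_W m : 3 <= m -> test_fn (fun y => cutoff m y * W y).
Proof.
  intros Hm. split.
  - exists (/ m), (2 * m). split.
    + split; [apply Rinv_0_lt_compat; lra |].
      apply Rlt_le_trans with 1; [rewrite <- Rinv_1; apply Rinv_lt_contravar |]; lra.
    + intros y Hy. rewrite cutoff_support by auto. ring.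
  - intros k y Hy.
    apply (smooth_on_mult _ (cutoff m) W (open_gt 0) (smooth_on_of_smooth _ _ (smooth_cutoff m))
      smooth_on_W k k y); auto.
Qed.

Lemma in_closure_graph_W : in_closure_graph f0 W (fun y => -1 * W y).
Proof.
  destruct l2rho_cutoff_W_error as [T1 [HT1 L1]].
  destruct l2rho_cutoff_residual as [T2 [HT2 L2]].
  exists (fun n y => cutoff (INR n + 3) y * W y). split.
  - intros n. apply test_fn_cutoff_W. generalize (pos_INR n). lra.
  - intros eps Heps. destruct (INR_unbounded ((T1 + T2) / eps)) as [N HN].
    exists N. intros n Hn. set (m := INR n + 3).
    assert (Hm : 3 <= m) by (unfold m; generalize (pos_INR n); lra).
    assert (HTm : (T1 + T2) / m <= eps).
    { apply Rle_div_l; [lra |].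
      assert (INR N <= INR n) by (apply le_INR; auto).
      assert (Lt : (T1 + T2) / eps < m) by (unfold m; lra).
      apply Rlt_div_l in Lt; [lra | exact Heps]. }
    assert (0 < / m) by (apply Rinv_0_lt_compat; lra).
    assert (T1 / m <= (T1 + T2) / m /\ T2 / m <= (T1 + T2) / m)
      by (unfold Rdiv; split; apply Rmult_le_compat_r; lra).
    split; [apply l2rho_sq_le_weaken with (T1 / m) | apply l2rho_sq_le_weaken with (T2 / m)];
      auto; lra.
Qed.

End Profile.

Theorem lemma3 (f0 : R -> R)
  (Hsmooth : smooth_closed_halfline f0)
  (Hmono : monotone_halfline f0)
  (Hode : forall y, 0 < y ->
     Derive_n f0 2 y + (2 / y - y / 2) * Derive f0 y
       - sin (2 * f0 y) / y ^ 2 = 0)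
  (H0 : f0 0 = 0)
  (Hinf : exists L, filterlim f0 (Rbar_locally p_infty) (locally L))
  (Hclose : weighted_norm_le (fun y => f0 y - ftilde y) (5 / 10000)) :
  eigenfunction_A0 f0 (fun y => y * Derive f0 y) (-1) /\
  (forall y, 0 < y -> 0 < y * Derive f0 y).
Proof.
  assert (Wpos : forall y, 0 < y -> 0 < y * Derive f0 y)
    by (intros y Hy; apply Rmult_lt_0_compat; [exact Hy | now apply (df0_pos f0)]).
  split; [split | exact Wpos].
  - exact (in_closure_graph_W f0 Hsmooth Hode H0 Hinf Hmono Hclose).
  - exists 1. split; [lra |]. generalize (Wpos 1 ltac:(lra)). lra.
Qed.
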